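(* For each $n\in\mathbb{N}$ and $r\in(0,+\infty]$, the continuous $\mathcal{O}(\mathbb{C}^\times)$-algebra homomorphism $\mathcal{O}_{\mathrm{def}}(\mathbb{D}_r^n)\to\mathcal{O}^T_{\mathrm{def}}(\mathbb{D}_r^n)$ induced by the inclusion $\mathcal{F}(\mathbb{D}_r^n)\subset\mathcal{F}^T(\mathbb{D}_r^n)$ (sending the class of $\zeta_i$ to the class of $\zeta_i$ and $z$ to $z$) is a topological isomorphism.
   Context: $\mathbb{C}^\times=\mathbb{C}\setminus\{0\}$; $\mathcal{O}(\mathbb{C}^\times)$ holomorphic functions on $\mathbb{C}^\times$, coordinate $z$. $W_n$: finite words $\alpha$ over $\{1,\dots,n\}$, length $|\alpha|$; $s(\alpha)$ is the number of $i$ with $\alpha_i\ne\alpha_{i+1}$ ($s(\alpha)=|\alpha|-1$ if $|\alpha|\le1$). $\mathcal{F}^T(\mathbb{D}_r^n)$: Fréchet algebra of series $\sum_\alpha c_\alpha\zeta_\alpha$ with $\sum|c_\alpha|\rho^{|\alpha|}<\infty$ for all $\rho\in(0,r)$; $\mathcal{F}(\mathbb{D}_r^n)$: those with $\sum|c_\alpha|\rho^{|\alpha|}\tau^{s(\alpha)+1}<\infty$ for all $\rho\in(0,r)$, $\tau\ge1$; both with concatenation product and topology from these norms (so $\mathcal{F}(\mathbb{D}_r^n)\subset\mathcal{F}^T(\mathbb{D}_r^n)$ continuously). For such $F$, $\mathcal{O}(\mathbb{C}^\times,F)\cong\mathcal{O}(\mathbb{C}^\times)\widehat\otimes F$; $\mathcal{O}_{\mathrm{def}}(\mathbb{D}_r^n)$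 and $\mathcal{O}^T_{\mathrm{def}}(\mathbb{D}_r^n)$ are the quotients of $\mathcal{O}(\mathbb{C}^\times,\mathcal{F}(\mathbb{D}_r^n))$ and $\mathcal{O}(\mathbb{C}^\times,\mathcal{F}^T(\mathbb{D}_r^n))$ by the closed two-sided ideals generated by $\zeta_i\zeta_j-z\zeta_j\zeta_i$ ($i<j$). *)

From Stdlib Require Import Reals ZArith List.
Open Scope R_scope.

Definition C := (R * R)%type.
Definition C0 : C := (0, 0).
Definition C1 : C := (1, 0).
Definition Cadd (x y : C) : C := (fst x + fst y, snd x + snd y).
Definition Copp (x : C) : C := (- fst x, - snd x).
Definition Csub (x y : C) : C := Cadd x (Copp y).
Definition Cmul (x y : C) : C :=
  (fst x * fst y - snd x * snd y, fst x * snd y + snd x * fst y).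
Definition Cnorm (x : C) : R := sqrt (fst x * fst x + snd x * snd x).

Definition CSeries (u : nat -> C) (L : C) : Prop :=
  infinite_sum (fun k => fst (u k)) (fst L) /\ infinite_sum (fun k => snd (u k)) (snd L).

Definition ZHasSum (f : Z -> C) (L : C) : Prop :=
  exists L1 L2, CSeries (fun k => f (Z.of_nat k)) L1 /\
                CSeries (fun k => f (- Z.of_nat (S k))%Z) L2 /\ L = Cadd L1 L2.

(** Words over {0,...,n-1} (letters shifted by one w.r.t. the paper). *)
Definition word := list nat.
Definition valid (n : nat) (a : word) : Prop := Forall (fun i => (i < n)%nat) a.

(** switches a = number of i with a_i <> a_{i+1}; splus1 a = s(a)+1
    (so splus1 [] = 0, splus1 [x] = 1, as in the paper's convention). *)
Fixpoint switches (a : word) : nat :=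
  match a with
  | x :: ((y :: _) as t) => ((if Nat.eq_dec x y then 0 else 1) + switches t)%nat
  | _ => 0%nat
  end.
Definition splus1 (a : word) : nat :=
  match a with nil => 0%nat | _ => S (switches a) end.

Fixpoint words (n m : nat) : list word :=
  match m with
  | O => nil :: nil
  | S m' => flat_map (fun i => map (cons i) (words n m')) (seq 0 n)
  end.

Definition sumR {A} (f : A -> R) (l : list A) : R := fold_right (fun x s => f x + s) 0 l.
Definition sumC {A} (f : A -> C) (l : list A) : C := fold_right (fun x s => Cadd (f x) s) C0 l.

(** Elements of O(C^x, F) are encoded by their coefficient families
    c k a  (coefficient of z^k zeta_a, k : Z). *)
Definition Coef := Z -> word -> C.
Definition czero : Coef := fun _ _ => C0.

(** Finite partial weighted l^1-sums: |k| <= N, |a| <= N. *)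
Definition PS (n : nat) (w : Z -> word -> R) (c : Coef) (N : nat) : R :=
  sumR (fun k => sumR (fun m => sumR (fun a => Cnorm (c k a) * w k a) (words n m))
                      (seq 0 (S N)))
       (map (fun i => (Z.of_nat i - Z.of_nat N)%Z) (seq 0 (S (2 * N)))).

(** Radius r in (0,+oo]: None stands for +oo. *)
Definition ltr (r : option R) (s : R) : Prop :=
  match r with Some r' => s < r' | None => True end.

(** Seminorm parameters p = (rho, sigma, tau).  The Laurent factor is rho^|k|
    with rho >= 1 (equivalent, directed, family to sum_k |a_k| rho^k, rho>0). *)
Definition param := (R * R * R)%type.
Definition adm (r : option R) (p : param) : Prop :=
  let '(rho, sg, tau) := p in 1 <= rho /\ 0 < sg /\ ltr r sg /\ 1 <= tau.

(** weights for O(C^x, F(D_r^n)) *)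
Definition wF (p : param) (k : Z) (a : word) : R :=
  let '(rho, sg, tau) := p in rho ^ Z.abs_nat k * sg ^ length a * tau ^ splus1 a.
(** weights for O(C^x, F^T(D_r^n)) (tau unused) *)
Definition wFT (p : param) (k : Z) (a : word) : R :=
  let '(rho, sg, tau) := p in rho ^ Z.abs_nat k * sg ^ length a.

Definition InSp (n : nat) (r : option R) (W : param -> Z -> word -> R) (c : Coef) : Prop :=
  (forall k a, ~ valid n a -> c k a = C0) /\
  forall p, adm r p -> exists M, forall N, PS n (W p) c N <= M.

(** Product (Cauchy product in z, concatenation in words). *)
Definition IsProd (a b c : Coef) : Prop :=
  forall m g, ZHasSum (fun k => sumC (fun j =>
                   Cmul (a k (firstn j g)) (b (m - k)%Z (skipn j g))) (seq 0 (S (length g))))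
                 (c m g).

(** Generators zeta_i zeta_j - z zeta_j zeta_i. *)
Definition gen (i j : nat) : Coef := fun k a =>
  if andb (Z.eqb k 0) (if list_eq_dec Nat.eq_dec a (i :: j :: nil) then true else false) then C1
  else if andb (Z.eqb k 1) (if list_eq_dec Nat.eq_dec a (j :: i :: nil) then true else false) then Copp C1
  else C0.

(** Algebraic two-sided ideal generated by the gen i j (i<j<n) in the space. *)
Inductive InJ (n : nat) (r : option R) (W : param -> Z -> word -> R) : Coef -> Prop :=
| J0 : InJ n r W czero
| JS : forall x u v t w i j y,
    InJ n r W x -> InSp n r W u -> InSp n r W v -> (i < j)%nat -> (j < n)%nat ->
    IsProd u (gen i j) t -> IsProd t v w ->
    (forall k a, y k a = Cadd (x k a) (w k a)) -> InJ n r W y.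

Definition csub (x y : Coef) : Coef := fun k a => Csub (x k a) (y k a).
Definition cadd (x y : Coef) : Coef := fun k a => Cadd (x k a) (y k a).

(** Closure of that ideal (= closed two-sided ideal generated). *)
Definition InI (n : nat) (r : option R) (W : param -> Z -> word -> R) (c : Coef) : Prop :=
  InSp n r W c /\
  forall p, adm r p -> forall eps, 0 < eps ->
    exists y, InJ n r W y /\ forall N, PS n (W p) (csub c y) N <= eps.

(** "the quotient seminorm of the class of c for parameter p is <= M" *)
Definition QB (n : nat) (r : option R) (W : param -> Z -> word -> R)
    (p : param) (c : Coef) (M : R) : Prop :=
  forall eps, 0 < eps -> exists x, InI n r W x /\ forall N, PS n (W p) (cadd c x) N <= M + eps.

From Stdlib Require Import Reals ZArith List Lia Lra Permutation Bool.
From Stdlib Require Import ClassicalEpsilon FunctionalExtensionality.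
From Coquelicot Require Complex.
Open Scope R_scope.

(** In the quotient, [zeta_i zeta_j = z zeta_j zeta_i] for
    [i < j], so every monomial [z^k zeta_a] is congruent to
    [z^(k + asc a) zeta_a'], where [asc a] counts the pairs of positions of [a]
    carrying increasing letters and [a'] is the non-increasing rearrangement of
    [a].  The resulting "normal-ordered coefficients" [ncoef] are continuous for
    both topologies, vanish on the ideal (on a product [u g v] they telescope in
    the power of [z]) and, conversely, every element on which they vanish lies
    in the closed ideal.  Hence both quotients are identified with the space of
    normal-ordered coefficients, and it only remains to compare the seminorms.
    The [F]-seminorms carry the extra factor [tau^(s(a)+1)], but every word can
    be rearranged, without changing its letters or [asc], into a word with at
    most [switch_bound n] switches; moving the coefficients of an [F^T]-element
    onto such representatives gives an [F]-element in the same class whose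
    [F]-seminorm is at most [tau^(switch_bound n + 1)] times the
    [F^T]-seminorm. *)

(** * Complex numbers and finite sums *)

Lemma C_ext (x y : C) : fst x = fst y -> snd x = snd y -> x = y.
Proof. destruct x, y; simpl; intros; subst; auto. Qed.

Ltac Cring := unfold Csub, Cadd, Cmul, Copp, C0, C1; apply C_ext; simpl; ring.

Lemma Cnorm_Cmod x : Cnorm x = Complex.Cmod x.
Proof. unfold Cnorm, Complex.Cmod. f_equal. simpl. ring. Qed.

Lemma Cnorm_triangle x y : Cnorm (Cadd x y) <= Cnorm x + Cnorm y.
Proof. rewrite !Cnorm_Cmod. apply Complex.Cmod_triangle. Qed.

Lemma Cnorm_mul x y : Cnorm (Cmul x y) = Cnorm x * Cnorm y.
Proof. rewrite !Cnorm_Cmod. apply Complex.Cmod_mult. Qed.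

Lemma Cnorm_nonneg x : 0 <= Cnorm x.
Proof. apply sqrt_pos. Qed.

Lemma Cnorm_C0 : Cnorm C0 = 0.
Proof. rewrite Cnorm_Cmod. apply Complex.Cmod_0. Qed.

Lemma Cnorm_C1 : Cnorm C1 = 1.
Proof. rewrite Cnorm_Cmod. apply Complex.Cmod_1. Qed.

Lemma Cnorm_opp x : Cnorm (Copp x) = Cnorm x.
Proof. rewrite !Cnorm_Cmod. apply Complex.Cmod_opp. Qed.

Lemma Cnorm_sub x y : Cnorm (Csub x y) <= Cnorm x + Cnorm y.
Proof. unfold Csub. rewrite <- (Cnorm_opp y). apply Cnorm_triangle. Qed.

Lemma Cnorm_fst x : Rabs (fst x) <= Cnorm x.
Proof. rewrite Cnorm_Cmod. eapply Rle_trans; [apply Rmax_l | apply Complex.Rmax_Cmod]. Qed.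

Lemma Cnorm_snd x : Rabs (snd x) <= Cnorm x.
Proof. rewrite Cnorm_Cmod. eapply Rle_trans; [apply Rmax_r | apply Complex.Rmax_Cmod]. Qed.

Lemma Cnorm_le0 x : Cnorm x <= 0 -> x = C0.
Proof.
  intros H. rewrite Cnorm_Cmod in H. apply Complex.Cmod_eq_0.
  pose proof (Complex.Cmod_ge_0 x). lra.
Qed.

Section Sums.
Context {A : Type}.

Lemma sumR_app (f : A -> R) l1 l2 : sumR f (l1 ++ l2) = sumR f l1 + sumR f l2.
Proof. induction l1; simpl; [ring | rewrite IHl1; ring]. Qed.

Lemma sumR_ext (f g : A -> R) l : (forall x, In x l -> f x = g x) -> sumR f l = sumR g l.
Proof. induction l; simpl; intros; auto. rewrite H, IHl; auto. Qed.

Lemma sumR_plus (f g : A -> R) l : sumR (fun x => f x + g x) l = sumR f l + sumR g l.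
Proof. induction l; simpl; [ring | rewrite IHl; ring]. Qed.

Lemma sumR_minus (f g : A -> R) l : sumR (fun x => f x - g x) l = sumR f l - sumR g l.
Proof. induction l; simpl; [ring | rewrite IHl; ring]. Qed.

Lemma sumR_scal (c : R) (f : A -> R) l : sumR (fun x => c * f x) l = c * sumR f l.
Proof. induction l; simpl; [ring | rewrite IHl; ring]. Qed.

Lemma sumR_zero (f : A -> R) l : (forall x, In x l -> f x = 0) -> sumR f l = 0.
Proof. induction l; simpl; intros; auto. rewrite H, IHl; auto. ring. Qed.

Lemma sumR_le (f g : A -> R) l : (forall x, In x l -> f x <= g x) -> sumR f l <= sumR g l.
Proof.
  induction l; simpl; intros H; [lra |].
  pose proof (H a (or_introl eq_refl)). pose proof (IHl (fun x h => H x (or_intror h))). lra.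
Qed.

Lemma sumR_nonneg (f : A -> R) l : (forall x, In x l -> 0 <= f x) -> 0 <= sumR f l.
Proof. intros. rewrite <- (sumR_zero (fun _ => 0) l) by auto. apply sumR_le; auto. Qed.

Lemma sumR_perm (f : A -> R) l l' : Permutation l l' -> sumR f l = sumR f l'.
Proof. induction 1; simpl; lra. Qed.

Lemma sumR_single (f : A -> R) l z :
  NoDup l -> In z l -> (forall x, In x l -> x <> z -> f x = 0) -> sumR f l = f z.
Proof.
  induction l; simpl; intros Hn Hi H; [contradiction |].
  inversion Hn; subst. destruct Hi as [<- | Hi].
  - rewrite sumR_zero; [ring |]. intros x Hx. apply H; auto. intros ->; contradiction.
  - rewrite IHl; auto. rewrite H; auto. ring. intros ->; contradiction.
Qed.

Lemma sumR_single_out (f : A -> R) l z :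
  ~ In z l -> (forall x, In x l -> x <> z -> f x = 0) -> sumR f l = 0.
Proof. intros Hi H. apply sumR_zero. intros x Hx. apply H; auto. intros ->; contradiction. Qed.

Lemma sumR_single_term (f : A -> R) l z :
  In z l -> (forall x, In x l -> 0 <= f x) -> f z <= sumR f l.
Proof.
  induction l; simpl; intros Hi H; [contradiction |].
  destruct Hi as [<- | Hi].
  - pose proof (sumR_nonneg f l (fun x h => H x (or_intror h))). lra.
  - pose proof (IHl Hi (fun x h => H x (or_intror h))). pose proof (H a (or_introl eq_refl)). lra.
Qed.

End Sums.

Lemma sumR_map {A B} (f : B -> R) (g : A -> B) l : sumR f (map g l) = sumR (fun x => f (g x)) l.
Proof. induction l; simpl; auto. rewrite IHl; auto. Qed.

Lemma sumR_flat_map {A B} (f : B -> R) (g : A -> list B) l :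
  sumR f (flat_map g l) = sumR (fun x => sumR f (g x)) l.
Proof. induction l; simpl; auto. rewrite sumR_app, IHl; auto. Qed.

Lemma sumR_swap {A B} (F : A -> B -> R) l1 l2 :
  sumR (fun x => sumR (fun y => F x y) l2) l1 = sumR (fun y => sumR (fun x => F x y) l1) l2.
Proof.
  induction l1; simpl. rewrite sumR_zero; auto.
  rewrite IHl1, <- sumR_plus. auto.
Qed.

Lemma sumR_indicator {A} (dec : forall x y : A, {x = y} + {x <> y}) (g : A -> R) l l' :
  NoDup l -> NoDup l' -> incl l l' ->
  sumR (fun x => if in_dec dec x l then g x else 0) l' = sumR g l.
Proof.
  intros Hn Hn' Hi.
  transitivity (sumR (fun x => sumR (fun z => if dec z x then g z else 0) l) l').
  - apply sumR_ext. intros x _. destruct in_dec.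
    + symmetry. rewrite (sumR_single _ l x); auto. destruct dec; congruence.
      intros y _ Hy. destruct dec; congruence.
    + symmetry. apply (sumR_single_out _ l x); auto. intros y _ Hy. destruct dec; congruence.
  - rewrite sumR_swap. apply sumR_ext. intros z Hz.
    rewrite (sumR_single _ l' z); auto. destruct dec; congruence.
    intros y _ Hy. destruct dec; congruence.
Qed.

Lemma sumC_fst {A} (f : A -> C) l : fst (sumC f l) = sumR (fun x => fst (f x)) l.
Proof. induction l; simpl; auto. rewrite IHl; auto. Qed.

Lemma sumC_snd {A} (f : A -> C) l : snd (sumC f l) = sumR (fun x => snd (f x)) l.
Proof. induction l; simpl; auto. rewrite IHl; auto. Qed.

Ltac Csum := apply C_ext; rewrite ?sumC_fst, ?sumC_snd; simpl; rewrite ?sumC_fst, ?sumC_snd.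

Lemma sumC_ext {A} (f g : A -> C) l : (forall x, In x l -> f x = g x) -> sumC f l = sumC g l.
Proof. induction l; simpl; intros; auto. rewrite H, IHl; auto. Qed.

Lemma sumC_add {A} (f g : A -> C) l :
  sumC (fun x => Cadd (f x) (g x)) l = Cadd (sumC f l) (sumC g l).
Proof. induction l; simpl. Cring. rewrite IHl. Cring. Qed.

Lemma sumC_opp {A} (f : A -> C) l : sumC (fun x => Copp (f x)) l = Copp (sumC f l).
Proof. induction l; simpl. Cring. rewrite IHl. Cring. Qed.

Lemma sumC_sub {A} (f g : A -> C) l :
  sumC (fun x => Csub (f x) (g x)) l = Csub (sumC f l) (sumC g l).
Proof. unfold Csub. rewrite sumC_add, sumC_opp. auto. Qed.

Lemma sumC_zero {A} (f : A -> C) l : (forall x, In x l -> f x = C0) -> sumC f l = C0.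
Proof. induction l; simpl; intros; auto. rewrite H, IHl; auto. Cring. Qed.

Lemma sumC_perm {A} (f : A -> C) l l' : Permutation l l' -> sumC f l = sumC f l'.
Proof. intros. Csum; apply sumR_perm; auto. Qed.

Lemma sumC_map {A B} (f : B -> C) (g : A -> B) l : sumC f (map g l) = sumC (fun x => f (g x)) l.
Proof. induction l; simpl; auto. rewrite IHl; auto. Qed.

Lemma sumC_swap {A B} (F : A -> B -> C) l1 l2 :
  sumC (fun x => sumC (fun y => F x y) l2) l1 = sumC (fun y => sumC (fun x => F x y) l1) l2.
Proof.
  induction l1; simpl. rewrite sumC_zero; auto.
  rewrite IHl1, <- sumC_add. auto.
Qed.

Lemma sumC_single {A} (f : A -> C) l z :
  NoDup l -> In z l -> (forall x, In x l -> x <> z -> f x = C0) -> sumC f l = f z.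
Proof.
  intros.
  Csum; [apply (sumR_single (fun x => fst (f x))) | apply (sumR_single (fun x => snd (f x)))];
    auto; intros x Hx Hxz; rewrite H1; auto.
Qed.

Lemma sumC_single_out {A} (f : A -> C) l z :
  ~ In z l -> (forall x, In x l -> x <> z -> f x = C0) -> sumC f l = C0.
Proof. intros Hi H. apply sumC_zero. intros x Hx. apply H; auto. intros ->; contradiction. Qed.

Lemma sumC_if_dec {A} {P Q : Prop} (b : {P} + {Q}) (f : A -> C) l :
  (if b then sumC f l else C0) = sumC (fun x => if b then f x else C0) l.
Proof. destruct b; auto. symmetry; apply sumC_zero; auto. Qed.

Lemma sumC_involution {A} (f : A -> C) (s : A -> A) l : NoDup l ->
  (forall x, In x l -> In (s x) l) -> (forall x, In x l -> s (s x) = x) ->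
  sumC f l = sumC (fun x => f (s x)) l.
Proof.
  intros Hn Hin Hinv. rewrite <- (sumC_map f s l). apply sumC_perm. symmetry.
  apply Permutation_map_same_l.
  - apply FinFun.Injective_map_NoDup_in; auto.
    intros x y Hx Hy E. rewrite <- (Hinv x Hx), <- (Hinv y Hy), E. auto.
  - intros z Hz. apply in_map_iff in Hz. destruct Hz as [x [<- Hx]]. auto.
Qed.

Lemma Cnorm_sumC {A} (f : A -> C) l : Cnorm (sumC f l) <= sumR (fun x => Cnorm (f x)) l.
Proof.
  induction l; simpl. rewrite Cnorm_C0; lra.
  eapply Rle_trans. apply Cnorm_triangle. lra.
Qed.

Lemma NoDup_flat_map {A B} (g : A -> list B) l :
  NoDup l -> (forall x, In x l -> NoDup (g x)) ->
  (forall x y z, In x l -> In y l -> In z (g x) -> In z (g y) -> x = y) ->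
  NoDup (flat_map g l).
Proof.
  induction l; simpl; intros Hn Hg Hd. constructor.
  inversion Hn; subst. apply NoDup_app.
  - apply Hg; simpl; auto.
  - apply IHl; auto. intros x y z Hx Hy; apply Hd; simpl; auto.
  - intros z Hz Hz'. apply in_flat_map in Hz'. destruct Hz' as [y [Hy Hzy]].
    assert (a = y) by (apply (Hd a y z); simpl; auto). subst. contradiction.
Qed.

(** * Words and the partial sums [PS] *)

Lemma In_words n m a : In a (words n m) <-> valid n a /\ length a = m.
Proof.
  revert a; induction m; intros a; simpl.
  - split. intros [<-|[]]. split; [constructor|auto].
    intros [_ H]. destruct a; simpl in H; [auto|lia].
  - rewrite in_flat_map. split.
    + intros [i [Hi Ha]]. apply in_map_iff in Ha. destruct Ha as [b [<- Hb]].
      apply IHm in Hb. destruct Hb. apply in_seq in Hi. split; [constructor; auto; lia|simpl; lia].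
    + intros [Hv Hl]. destruct a as [|i b]; simpl in Hl; [lia|].
      inversion Hv; subst. exists i. split. apply in_seq; lia.
      apply in_map. apply IHm. split; auto.
Qed.

Lemma NoDup_words n m : NoDup (words n m).
Proof.
  induction m; simpl. repeat constructor; auto.
  apply NoDup_flat_map. apply seq_NoDup.
  intros i _. apply FinFun.Injective_map_NoDup; auto. intros x y H'; injection H'; auto.
  intros x y z _ _ H1 H2. apply in_map_iff in H1, H2.
  destruct H1 as [? [<- _]]. destruct H2 as [? [H _]]. injection H; auto.
Qed.

Lemma words_valid n m a : In a (words n m) -> valid n a.
Proof. intros H; apply In_words in H; tauto. Qed.

Definition zrange (N : nat) : list Z := map (fun i => (Z.of_nat i - Z.of_nat N)%Z) (seq 0 (S (2 * N))).

Lemma In_zrange N k : In k (zrange N) <-> (- Z.of_nat N <= k <= Z.of_nat N)%Z.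
Proof.
  unfold zrange. rewrite in_map_iff. split.
  - intros [i [<- Hi]]. apply in_seq in Hi. lia.
  - intros H. exists (Z.to_nat (k + Z.of_nat N)). split. lia. apply in_seq. lia.
Qed.

Lemma NoDup_zrange N : NoDup (zrange N).
Proof. apply FinFun.Injective_map_NoDup. intros x y H; lia. apply seq_NoDup. Qed.

Definition box (n N : nat) : list (Z * word) :=
  flat_map (fun k => flat_map (fun m => map (fun a => (k, a)) (words n m)) (seq 0 (S N))) (zrange N).

Lemma In_box n N k a : In (k, a) (box n N) <->
  ((- Z.of_nat N <= k <= Z.of_nat N)%Z /\ valid n a /\ (length a <= N)%nat).
Proof.
  unfold box. rewrite in_flat_map. split.
  - intros [k' [Hk H]]. apply in_flat_map in H. destruct H as [m [Hm H]].
    apply in_map_iff in H. destruct H as [b [Hb Hb']]. injection Hb; intros; subst.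
    apply In_zrange in Hk. apply In_words in Hb'. apply in_seq in Hm. intuition lia.
  - intros [Hk [Hv Hl]]. exists k. split. apply In_zrange; auto.
    apply in_flat_map. exists (length a). split. apply in_seq; lia.
    apply in_map. apply In_words; auto.
Qed.

Lemma NoDup_box n N : NoDup (box n N).
Proof.
  unfold box. apply NoDup_flat_map. apply NoDup_zrange.
  - intros k _. apply NoDup_flat_map. apply seq_NoDup.
    + intros m _. apply FinFun.Injective_map_NoDup. intros x y H; injection H; auto.
      apply NoDup_words.
    + intros x y z _ _ H1 H2. apply in_map_iff in H1, H2.
      destruct H1 as [a [<- Ha]]. destruct H2 as [b [Hb Hb']]. injection Hb; intros; subst.
      apply In_words in Ha, Hb'. lia.
  - intros x y z _ _ H1 H2. apply in_flat_map in H1, H2.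
    destruct H1 as [m [_ H1]]. destruct H2 as [m' [_ H2]].
    apply in_map_iff in H1, H2. destruct H1 as [a [<- _]]. destruct H2 as [b [Hb _]].
    injection Hb; auto.
Qed.

Lemma PS_box n w c N :
  PS n w c N = sumR (fun ka => Cnorm (c (fst ka) (snd ka)) * w (fst ka) (snd ka)) (box n N).
Proof.
  unfold PS, box. rewrite sumR_flat_map. fold (zrange N). apply sumR_ext. intros k _.
  rewrite sumR_flat_map. apply sumR_ext. intros m _. rewrite sumR_map. simpl. auto.
Qed.

Definition ZW_eq_dec : forall x y : Z * word, {x = y} + {x <> y}.
Proof. decide equality. apply list_eq_dec, Nat.eq_dec. apply Z.eq_dec. Defined.

Lemma box_incl n N N' : (N <= N')%nat -> incl (box n N) (box n N').
Proof. intros H [k a] Hx. apply In_box in Hx. apply In_box. intuition lia. Qed.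

Definition nonneg_weight (w : Z -> word -> R) := forall k a, 0 <= w k a.

Lemma PS_nonneg n w c N : nonneg_weight w -> 0 <= PS n w c N.
Proof.
  intros Hw. rewrite PS_box. apply sumR_nonneg. intros. apply Rmult_le_pos. apply Cnorm_nonneg.
  apply Hw.
Qed.

Lemma PS_term n w c N k a : nonneg_weight w -> In (k, a) (box n N) ->
  Cnorm (c k a) * w k a <= PS n w c N.
Proof.
  intros Hw H. rewrite PS_box.
  apply (sumR_single_term (fun ka => Cnorm (c (fst ka) (snd ka)) * w (fst ka) (snd ka)) _ (k, a)); auto.
  intros. apply Rmult_le_pos. apply Cnorm_nonneg. apply Hw.
Qed.

Lemma box_exists n k a : valid n a -> exists N, In (k, a) (box n N).
Proof.
  intros Hv. exists (Nat.max (Z.abs_nat k) (length a)). apply In_box. split; [|split]; auto; lia.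
Qed.

Lemma PS_le n w w' c c' N :
  (forall k a, valid n a -> Cnorm (c k a) * w k a <= Cnorm (c' k a) * w' k a) ->
  PS n w c N <= PS n w' c' N.
Proof.
  intros H. rewrite !PS_box. apply sumR_le. intros [k a] Hx. apply In_box in Hx. apply H; tauto.
Qed.

Lemma PS_ext n w c c' N : (forall k a, c k a = c' k a) -> PS n w c N = PS n w c' N.
Proof.
  intros H. unfold PS. apply sumR_ext; intros; apply sumR_ext; intros; apply sumR_ext; intros.
  rewrite H; auto.
Qed.

Lemma PS_add n w c c' N : nonneg_weight w ->
  PS n w (fun k a => Cadd (c k a) (c' k a)) N <= PS n w c N + PS n w c' N.
Proof.
  intros Hw. rewrite !PS_box. rewrite <- sumR_plus. apply sumR_le. intros [k a] _. simpl.
  pose proof (Cnorm_triangle (c k a) (c' k a)). pose proof (Hw k a). nra.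
Qed.

Lemma PS_sub n w c c' N : nonneg_weight w ->
  PS n w (fun k a => Csub (c k a) (c' k a)) N <= PS n w c N + PS n w c' N.
Proof.
  intros Hw. rewrite !PS_box. rewrite <- sumR_plus. apply sumR_le. intros [k a] _. simpl.
  pose proof (Cnorm_sub (c k a) (c' k a)). pose proof (Hw k a). nra.
Qed.

(** * Letter statistics of words *)

Definition count_gt (h : nat) (t : word) : nat := length (filter (fun z => Nat.ltb h z) t).
Arguments count_gt : simpl never.
Fixpoint asc (a : word) : nat := match a with nil => 0%nat | h :: t => (count_gt h t + asc t)%nat end.
Fixpoint asc_cross (A B : word) : nat :=
  match A with nil => 0%nat | h :: t => (count_gt h B + asc_cross t B)%nat end.
Definition occ (a : word) (x : nat) : nat := count_occ Nat.eq_dec a x.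
Arguments occ : simpl never.

Lemma count_gt_app h x y : count_gt h (x ++ y) = (count_gt h x + count_gt h y)%nat.
Proof. unfold count_gt. rewrite filter_app, length_app. auto. Qed.

Lemma count_gt_cons h z t : count_gt h (z :: t) = ((if Nat.ltb h z then 1 else 0) + count_gt h t)%nat.
Proof. unfold count_gt. simpl. destruct (Nat.ltb h z); simpl; auto. Qed.

Lemma asc_app x y : asc (x ++ y) = (asc x + asc y + asc_cross x y)%nat.
Proof. induction x; simpl; [lia|]. rewrite count_gt_app, IHx. lia. Qed.

Lemma asc_cross_app_r A B D : asc_cross A (B ++ D) = (asc_cross A B + asc_cross A D)%nat.
Proof. induction A; simpl; [lia|]. rewrite count_gt_app, IHA. lia. Qed.

Lemma count_gt_repeat h y e : count_gt h (repeat y e) = if Nat.ltb h y then e else 0%nat.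
Proof.
  induction e; simpl. destruct (Nat.ltb h y); auto. rewrite count_gt_cons, IHe.
  destruct (Nat.ltb h y); lia.
Qed.

Lemma asc_repeat y b : asc (repeat y b) = 0%nat.
Proof. induction b; simpl; auto. rewrite count_gt_repeat, Nat.ltb_irrefl. lia. Qed.

Lemma count_gt_0 h X : (forall z, In z X -> (z <= h)%nat) -> count_gt h X = 0%nat.
Proof.
  induction X; simpl; intros; auto. rewrite count_gt_cons, IHX; auto. assert (a <= h)%nat by auto.
  destruct (Nat.ltb_spec h a); lia.
Qed.

Lemma asc_cross_repeat_l y b X : (forall z, In z X -> (z <= y)%nat) -> asc_cross (repeat y b) X = 0%nat.
Proof. intros H. induction b; simpl; auto. rewrite IHb, count_gt_0; auto. Qed.

Lemma asc_cross_repeat_r A y e : (forall h, In h A -> (h < y)%nat) ->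
  asc_cross A (repeat y e) = (length A * e)%nat.
Proof. induction A; simpl; intros; auto. rewrite count_gt_repeat, IHA; auto.
  assert (a < y)%nat by auto. apply Nat.ltb_lt in H0. rewrite H0. lia.
Qed.

Lemma asc_swap x c1 c2 y :
  (asc (x ++ c1 :: c2 :: y) + (if Nat.ltb c2 c1 then 1 else 0) =
   asc (x ++ c2 :: c1 :: y) + (if Nat.ltb c1 c2 then 1 else 0))%nat.
Proof.
  rewrite !asc_app. simpl. rewrite !count_gt_cons.
  assert (asc_cross x (c1 :: c2 :: y) = asc_cross x (c2 :: c1 :: y)).
  { induction x; simpl; auto. rewrite IHx, !count_gt_cons. lia. }
  rewrite H. lia.
Qed.

Lemma count_gt_0_iff h X : count_gt h X = 0%nat <-> (forall z, In z X -> (z <= h)%nat).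
Proof.
  split; [|apply count_gt_0]. induction X; simpl; intros H z Hz; [contradiction|].
  rewrite count_gt_cons in H. destruct Hz as [<-|Hz].
  - destruct (Nat.ltb_spec h a); lia.
  - apply IHX; auto. lia.
Qed.

Lemma adjacent_ascent a : (asc a > 0)%nat -> exists x i j y, a = x ++ i :: j :: y /\ (i < j)%nat.
Proof.
  induction a as [|h t IH]; simpl; intros H; [lia|].
  destruct (Nat.eq_dec (asc t) 0) as [E|E].
  - destruct t as [|h2 t2]. simpl in H. unfold count_gt in H; simpl in H; lia.
    destruct (Nat.ltb_spec h h2).
    + exists nil, h, h2, t2. auto.
    + exfalso. simpl in E, H. assert (count_gt h2 t2 = 0)%nat by lia.
      rewrite count_gt_0_iff in H1. assert (count_gt h (h2 :: t2) = 0)%nat.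
      { apply count_gt_0_iff. intros z [<-|Hz]; auto. specialize (H1 z Hz). lia. }
      lia.
  - destruct IH as [x [i [j [y [-> Hij]]]]]. lia. exists (h :: x), i, j, y. auto.
Qed.

Lemma occ_cons_eq t x : occ (x :: t) x = S (occ t x).
Proof. unfold occ; simpl. destruct Nat.eq_dec; congruence. Qed.
Lemma occ_cons_neq t h x : h <> x -> occ (h :: t) x = occ t x.
Proof. unfold occ; simpl. destruct Nat.eq_dec; congruence. Qed.

Lemma occ_In a x : (occ a x > 0)%nat <-> In x a.
Proof. unfold occ. rewrite (count_occ_In Nat.eq_dec). reflexivity. Qed.

Lemma asc0_unique a : forall b, (forall x, occ a x = occ b x) ->
  asc a = 0%nat -> asc b = 0%nat -> a = b.
Proof.
  induction a as [|h t IH]; intros b Hc Ha Hb.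
  - destruct b as [|h' t']; auto. specialize (Hc h'). rewrite occ_cons_eq in Hc.
    unfold occ in Hc; simpl in Hc. lia.
  - destruct b as [|h' t']. specialize (Hc h). rewrite occ_cons_eq in Hc.
    unfold occ in Hc; simpl in Hc. lia.
    simpl in Ha, Hb. assert (Ht : count_gt h t = 0%nat) by lia.
    assert (Ht' : count_gt h' t' = 0%nat) by lia.
    rewrite count_gt_0_iff in Ht, Ht'.
    assert (h = h').
    { assert (In h' (h :: t)). { apply occ_In. rewrite Hc. rewrite occ_cons_eq. lia. }
      assert (In h (h' :: t')). { apply occ_In. rewrite <- Hc. rewrite occ_cons_eq. lia. }
      destruct H as [->|H]; auto. destruct H0 as [->|H0]; auto.
      specialize (Ht _ H). specialize (Ht' _ H0). lia. }
    subst. f_equal. apply IH; try lia. intros x. specialize (Hc x).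
    destruct (Nat.eq_dec h' x). subst. rewrite !occ_cons_eq in Hc. lia.
    rewrite !occ_cons_neq in Hc; auto.
Qed.

Definition content (n : nat) (a : word) : list nat := map (occ a) (seq 0 n).

Lemma valid_occ n a x : valid n a -> (n <= x)%nat -> occ a x = 0%nat.
Proof.
  intros Hv Hx. destruct (occ a x) eqn:E; auto. assert (In x a) by (apply occ_In; lia).
  unfold valid in Hv. rewrite Forall_forall in Hv. specialize (Hv x H). lia.
Qed.

Lemma content_occ n a b : valid n a -> valid n b -> content n a = content n b ->
  forall x, occ a x = occ b x.
Proof.
  intros Ha Hb Hk x. destruct (Nat.lt_ge_cases x n).
  - unfold content in Hk.
    assert (nth x (map (occ a) (seq 0 n)) 0%nat = nth x (map (occ b) (seq 0 n)) 0%nat) by congruence.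
    rewrite !(nth_indep _ 0%nat (occ a 0)) in H0 by (rewrite length_map, length_seq; auto).
    rewrite map_nth in H0.
    rewrite (nth_indep _ (occ a 0) (occ b 0)) in H0 by (rewrite length_map, length_seq; auto).
    rewrite map_nth in H0. rewrite seq_nth in H0 by auto. simpl in H0. auto.
  - rewrite !(valid_occ n); auto.
Qed.

Lemma occ_content n a b : (forall x, occ a x = occ b x) -> content n a = content n b.
Proof. intros H. unfold content. apply map_ext. auto. Qed.

Lemma valid_occ_transfer n a b : valid n a -> (forall x, occ a x = occ b x) -> valid n b.
Proof.
  intros Ha H. unfold valid in *. rewrite Forall_forall in *. intros x Hx.
  apply Ha. apply occ_In. rewrite H. apply occ_In. auto.
Qed.

Lemma occ_app a b x : occ (a ++ b) x = (occ a x + occ b x)%nat.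
Proof. unfold occ. apply count_occ_app. Qed.

Lemma occ_repeat y e x : occ (repeat y e) x = if Nat.eq_dec y x then e else 0%nat.
Proof.
  induction e; simpl. destruct Nat.eq_dec; auto. unfold occ in *; simpl. rewrite IHe.
  destruct Nat.eq_dec; auto.
Qed.

Definition swap_at (p : nat) (a : word) : word :=
  firstn p a ++ match skipn p a with c1 :: c2 :: r => c2 :: c1 :: r | r => r end.

Lemma swap_at_eq x c1 c2 y : swap_at (length x) (x ++ c1 :: c2 :: y) = x ++ c2 :: c1 :: y.
Proof.
  unfold swap_at. rewrite firstn_app, skipn_app, Nat.sub_diag, firstn_all, skipn_all. simpl.
  rewrite app_nil_r. auto.
Qed.

Lemma swap_at_short p a : (length a < p + 2)%nat -> swap_at p a = a.
Proof.
  intros H. unfold swap_at. destruct (skipn p a) as [|c1 [|c2 r]] eqn:E.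
  - rewrite app_nil_r. apply firstn_all2. destruct (Nat.le_gt_cases (length a) p); auto.
    assert (length (skipn p a) = 0)%nat by (rewrite E; auto). rewrite length_skipn in H1. lia.
  - rewrite <- E. apply firstn_skipn.
  - assert (length (skipn p a) = 2 + length r)%nat by (rewrite E; auto). rewrite length_skipn in H0.
    lia.
Qed.

Lemma split_at p a : (p + 2 <= length a)%nat ->
  a = firstn p a ++ nth p a 0%nat :: nth (S p) a 0%nat :: skipn (S (S p)) a /\ length (firstn p a) = p.
Proof.
  intros H. split; [|rewrite length_firstn; lia].
  rewrite <- (firstn_skipn p a) at 1. f_equal.
  revert a H. induction p; intros a H.
  - destruct a as [|c1 [|c2 r]]; simpl in *; try lia. auto.
  - destruct a as [|c a]; simpl in *; [lia|]. apply IHp. lia.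
Qed.

Ltac destruct_split_at p a H :=
  let E := fresh "E" in let L := fresh "L" in
  destruct (split_at p a H) as [E L];
  remember (firstn p a) as X; remember (skipn (S (S p)) a) as Y;
  remember (nth p a 0%nat) as c1; remember (nth (S p) a 0%nat) as c2;
  rewrite E; rewrite <- L.

Lemma swap_at_involutive p a : swap_at p (swap_at p a) = a.
Proof.
  destruct (Nat.lt_ge_cases (length a) (p + 2)).
  - rewrite (swap_at_short p a H). apply swap_at_short; auto.
  - destruct_split_at p a H. rewrite !swap_at_eq. auto.
Qed.

Lemma swap_at_occ p a x : occ (swap_at p a) x = occ a x.
Proof.
  destruct (Nat.lt_ge_cases (length a) (p + 2)).
  - rewrite swap_at_short; auto.
  - destruct_split_at p a H. rewrite swap_at_eq.
    rewrite !occ_app. unfold occ; simpl. repeat destruct Nat.eq_dec; lia.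
Qed.

Lemma swap_at_length p a : length (swap_at p a) = length a.
Proof.
  destruct (Nat.lt_ge_cases (length a) (p + 2)).
  - rewrite swap_at_short; auto.
  - destruct_split_at p a H. rewrite swap_at_eq. rewrite !length_app. simpl. auto.
Qed.

Lemma switches_cons2 h h2 t :
  switches (h :: h2 :: t) = ((if Nat.eq_dec h h2 then 0 else 1) + switches (h2 :: t))%nat.
Proof. reflexivity. Qed.

Lemma switches_app x z :
  (switches x + switches z <= switches (x ++ z) <= switches x + switches z + 1)%nat.
Proof.
  induction x as [| h x IH]; [simpl; lia |].
  destruct x as [| h2 x'].
  - destruct z as [| h2 z]; [simpl; lia |]. change ((h :: nil) ++ h2 :: z) with (h :: h2 :: z).
    rewrite switches_cons2. change (switches (h :: nil)) with 0%nat. destruct Nat.eq_dec; lia.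
  - change ((h :: h2 :: x') ++ z) with (h :: h2 :: (x' ++ z)).
    change ((h2 :: x') ++ z) with (h2 :: (x' ++ z)) in IH.
    rewrite !switches_cons2. destruct Nat.eq_dec; lia.
Qed.

Lemma switches_repeat y b : switches (repeat y b) = 0%nat.
Proof.
  induction b; auto. destruct b; auto. simpl repeat. rewrite switches_cons2. simpl repeat in IHb.
  rewrite IHb. destruct Nat.eq_dec; [lia|congruence].
Qed.

Lemma switches_firstn_skipn r u :
  (switches (firstn r u) <= switches u /\ switches (skipn r u) <= switches u)%nat.
Proof. pose proof (switches_app (firstn r u) (skipn r u)). rewrite firstn_skipn in H. lia. Qed.

(** * Rearranging words with few switches *)

Definition drop_letter (y : nat) (w : word) := filter (fun z => negb (Nat.eqb z y)) w.

Lemma drop_letter_occ_self y w : occ (drop_letter y w) y = 0%nat.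
Proof.
  destruct (occ (drop_letter y w) y) eqn:E; auto.
  assert (In y (drop_letter y w)) by (apply occ_In; lia).
  unfold drop_letter in H. apply filter_In in H. destruct H. rewrite Nat.eqb_refl in H0.
  discriminate.
Qed.

Lemma drop_letter_occ_other y w x : x <> y -> occ (drop_letter y w) x = occ w x.
Proof.
  intros Hx. induction w as [|h t IH]; simpl. auto.
  destruct (Nat.eqb_spec h y); simpl.
  - subst. rewrite occ_cons_neq; auto.
  - destruct (Nat.eq_dec h x). subst. rewrite !occ_cons_eq. lia. rewrite !occ_cons_neq; auto.
Qed.

Lemma drop_letter_occ y w x :
  occ w x = (occ (drop_letter y w) x + if Nat.eq_dec y x then occ w y else 0)%nat.
Proof.
  destruct (Nat.eq_dec y x). subst. rewrite drop_letter_occ_self. lia.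
  rewrite drop_letter_occ_other; auto. lia.
Qed.

Lemma drop_letter_length y w : length w = (length (drop_letter y w) + occ w y)%nat.
Proof.
  induction w as [|h t IH]; simpl. auto.
  destruct (Nat.eqb_spec h y).
  - subst. simpl. rewrite occ_cons_eq. lia.
  - simpl. rewrite occ_cons_neq; auto.
Qed.

Lemma count_gt_drop_letter h y t : (h < y)%nat -> (forall z, In z t -> (z <= y)%nat) ->
  count_gt h t = (count_gt h (drop_letter y t) + occ t y)%nat.
Proof.
  induction t as [|z t IH]; intros Hh Ht. unfold count_gt, occ; simpl; lia.
  rewrite count_gt_cons. simpl. destruct (Nat.eqb_spec z y).
  - subst. simpl. rewrite occ_cons_eq. rewrite IH; auto. 2: intros; apply Ht; simpl; auto.
    apply Nat.ltb_lt in Hh. rewrite Hh. lia.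
  - simpl. rewrite count_gt_cons. rewrite occ_cons_neq; auto. rewrite IH; auto. lia.
    intros; apply Ht; simpl; auto.
Qed.

Lemma asc_drop_max y w : (forall z, In z w -> (z <= y)%nat) ->
  exists c, asc w = (asc (drop_letter y w) + c)%nat /\ (c <= occ w y * length (drop_letter y w))%nat.
Proof.
  induction w as [|h t IH]; intros Hw. exists 0%nat. simpl. lia.
  destruct IH as [c [Hc1 Hc2]]. intros; apply Hw; simpl; auto.
  simpl. destruct (Nat.eqb_spec h y).
  - subst. simpl. exists c. rewrite count_gt_0. 2: intros; apply Hw; simpl; auto.
    rewrite occ_cons_eq. nia.
  - simpl. assert (h < y)%nat by (assert (h <= y)%nat by (apply Hw; simpl; auto); lia).
    exists (occ t y + c)%nat. rewrite count_gt_drop_letter with (y := y); auto.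
    2: intros; apply Hw; simpl; auto.
    rewrite occ_cons_neq; auto. simpl. split. lia. nia.
Qed.

Lemma asc_insert_max y b r e a u : (forall h, In h u -> (h < y)%nat) ->
  asc (repeat y b ++ firstn r u ++ repeat y e ++ skipn r u ++ repeat y a) =
  (asc u + e * length (firstn r u) + a * length u)%nat.
Proof.
  intros Hu.
  set (A := firstn r u). set (B := skipn r u).
  assert (EU : u = A ++ B) by (symmetry; apply firstn_skipn).
  assert (HA : forall h, In h A -> (h < y)%nat)
    by (intros; apply Hu; rewrite EU; apply in_or_app; auto).
  assert (HB : forall h, In h B -> (h < y)%nat)
    by (intros; apply Hu; rewrite EU; apply in_or_app; auto).
  assert (le_all : forall X, (forall h, In h X -> (h < y)%nat) ->
                  forall e' z, In z (X ++ repeat y e') -> (z <= y)%nat).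
  { intros X HX e' z Hz. apply in_app_or in Hz. destruct Hz. specialize (HX z H). lia.
    apply repeat_spec in H. lia. }
  rewrite asc_app, asc_repeat, asc_cross_repeat_l.
  2:{ intros z Hz. apply in_app_or in Hz. destruct Hz as [Hz|Hz]. specialize (HA z Hz); lia.
      apply in_app_or in Hz. destruct Hz as [Hz|Hz]. apply repeat_spec in Hz; lia.
      apply (le_all B HB a z Hz). }
  rewrite asc_app, asc_app, asc_repeat, asc_cross_repeat_l by (apply le_all; auto).
  rewrite asc_app, asc_repeat, asc_cross_repeat_r by auto.
  rewrite asc_cross_app_r, asc_cross_app_r, !asc_cross_repeat_r by auto.
  rewrite EU, asc_app, length_app. fold A. nia.
Qed.

Definition same_stats (K : nat) (w w' : word) : Prop :=
  (forall x, occ w' x = occ w x) /\ asc w' = asc w /\ (switches w' <= K)%nat /\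
  length w' = length w.

Fixpoint switch_bound (n : nat) : nat :=
  match n with O => O | S n' => (2 * switch_bound n' + 4)%nat end.

Lemma valid_drop_letter n w : valid (S n) w -> valid n (drop_letter n w).
Proof.
  unfold valid, drop_letter. rewrite !Forall_forall. intros Hw z Hz.
  apply filter_In in Hz. destruct Hz as [Hz1 Hz2]. specialize (Hw z Hz1).
  destruct (Nat.eqb_spec z n); simpl in Hz2; [discriminate | lia].
Qed.

(** The copies of the largest letter [n] are reinserted in three blocks:
    [b] in front (no ascending pair), [e] after [r] letters of [u']
    ([e * r] pairs) and [a] at the end ([a * length u'] pairs). *)
Lemma same_stats_insert_max n w u' b r e a :
  valid (S n) w -> same_stats (switch_bound n) (drop_letter n w) u' ->
  (b + e + a = occ w n)%nat ->
  asc w = (asc (drop_letter n w) + e * length (firstn r u') + a * length u')%nat ->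
  same_stats (switch_bound (S n)) w
    (repeat n b ++ firstn r u' ++ repeat n e ++ skipn r u' ++ repeat n a).
Proof.
  intros Hw [Hc [Ha [Hs Hl]]] Hocc Hasc.
  assert (Hu' : forall h, In h u' -> (h < n)%nat).
  { intros h Hh. pose proof (valid_drop_letter n w Hw) as Hu. unfold valid in Hu.
    rewrite Forall_forall in Hu. apply Hu, occ_In. rewrite <- Hc. apply occ_In; auto. }
  split; [| split; [| split]].
  - intros x. rewrite (drop_letter_occ n w x), <- Hc.
    rewrite <- (firstn_skipn r u') at 3. rewrite !occ_app, !occ_repeat.
    destruct Nat.eq_dec; lia.
  - rewrite asc_insert_max by auto. lia.
  - simpl switch_bound. pose proof (switches_firstn_skipn r u').
    pose proof (switches_app (repeat n b) (firstn r u' ++ repeat n e ++ skipn r u' ++ repeat n a)).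
    pose proof (switches_app (firstn r u') (repeat n e ++ skipn r u' ++ repeat n a)).
    pose proof (switches_app (repeat n e) (skipn r u' ++ repeat n a)).
    pose proof (switches_app (skipn r u') (repeat n a)).
    rewrite !switches_repeat in *. lia.
  - rewrite (drop_letter_length n w), !length_app, !repeat_length.
    rewrite <- (firstn_skipn r u') in Hl. rewrite length_app in Hl. lia.
Qed.

Lemma few_switches_rearrangement n w :
  valid n w -> exists w', same_stats (switch_bound n) w w'.
Proof.
  revert w. induction n as [| n IH]; intros w Hw.
  - destruct w as [| h t]; [exists nil; repeat split; auto |].
    inversion Hw. lia.
  - destruct (IH _ (valid_drop_letter n w Hw)) as [u' Hu'].
    destruct (asc_drop_max n w) as [c [Hc1 Hc2]].
    { intros z Hz. unfold valid in Hw. rewrite Forall_forall in Hw. specialize (Hw z Hz). lia. }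
    assert (Hl : length u' = length (drop_letter n w)) by apply Hu'.
    set (p := occ w n) in *. set (L := length u') in *. rewrite <- Hl in Hc2.
    destruct (Nat.eq_dec c (p * L)) as [E | E].
    + exists (repeat n 0 ++ firstn 0 u' ++ repeat n 0 ++ skipn 0 u' ++ repeat n p).
      apply same_stats_insert_max; auto; lia.
    + assert (HL : (L > 0)%nat) by (destruct L; lia).
      assert (Hq : (c / L < p)%nat) by (apply Nat.Div0.div_lt_upper_bound; lia).
      exists (repeat n (p - 1 - c / L) ++ firstn (c mod L) u' ++ repeat n 1
              ++ skipn (c mod L) u' ++ repeat n (c / L)).
      apply same_stats_insert_max; auto; [lia |].
      rewrite length_firstn. fold L. pose proof (Nat.mod_upper_bound c L).
      rewrite Nat.min_l by lia. pose proof (Nat.div_mod_eq c L). lia.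
Qed.

Lemma rearr_ex n w : exists w', valid n w -> same_stats (switch_bound n) w w'.
Proof.
  destruct (classic (valid n w)) as [H | H].
  - destruct (few_switches_rearrangement n w H) as [w' Hw']. exists w'. auto.
  - exists w. intros; contradiction.
Qed.

Definition rearr n (w : word) : word :=
  proj1_sig (constructive_indefinite_description _ (rearr_ex n w)).

Lemma rearr_spec n w : valid n w -> same_stats (switch_bound n) w (rearr n w).
Proof. unfold rearr. destruct constructive_indefinite_description; simpl; auto. Qed.

Lemma rearr_valid n w : valid n w -> valid n (rearr n w).
Proof.
  intros H. apply valid_occ_transfer with w; auto. intros; symmetry; apply rearr_spec; auto.
Qed.

Lemma rearr_words n m w : In w (words n m) -> In (rearr n w) (words n m).
Proof.
  intros H. apply In_words in H. destruct H as [Hv Hl]. apply In_words. split.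
  - apply rearr_valid; auto.
  - rewrite (proj2 (proj2 (proj2 (rearr_spec n w Hv)))). auto.
Qed.

Lemma rearr_content n w : valid n w -> content n (rearr n w) = content n w.
Proof. intros H. apply occ_content. apply rearr_spec; auto. Qed.

Lemma wF_nonneg r p : adm r p -> nonneg_weight (wF p).
Proof.
  destruct p as [[rho sg] tau]. intros [H1 [H2 [H3 H4]]] k a. simpl.
  apply Rmult_le_pos; [apply Rmult_le_pos |]; apply pow_le; lra.
Qed.

Lemma wFT_nonneg r p : adm r p -> nonneg_weight (wFT p).
Proof.
  destruct p as [[rho sg] tau]. intros [H1 [H2 [H3 H4]]] k a. simpl.
  apply Rmult_le_pos; apply pow_le; lra.
Qed.

Lemma wFT_le_wF r p k a : adm r p -> wFT p k a <= wF p k a.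
Proof.
  destruct p as [[rho sg] tau]. intros [H1 [H2 [H3 H4]]]. simpl.
  assert (0 <= rho ^ Z.abs_nat k * sg ^ length a) by (apply Rmult_le_pos; apply pow_le; lra).
  assert (1 <= tau ^ splus1 a) by (apply pow_R1_Rle; lra). nra.
Qed.

(** [ncoef n c M kap L] is the coefficient of [z^M zeta_a0] in the image of
    [c] in the quotient, where [a0] is the non-increasing word of length [L]
    with letter counts [kap]: each [z^k zeta_a] contributes to [M = k + asc a]. *)
Definition ncoef n (c : Coef) (M : Z) (kap : list nat) (L : nat) : C :=
  sumC (fun a => if list_eq_dec Nat.eq_dec (content n a) kap then c (M - Z.of_nat (asc a))%Z a
                 else C0) (words n L).

Definition rearr_coef n (d : Coef) : Coef := fun k w' =>
  sumC (fun w => if list_eq_dec Nat.eq_dec (rearr n w) w' then d k w else C0)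
       (words n (length w')).

Lemma ncoef_rearr_coef n d M kap L : ncoef n (rearr_coef n d) M kap L = ncoef n d M kap L.
Proof.
  unfold ncoef, rearr_coef.
  transitivity (sumC (fun a => sumC (fun w => if list_eq_dec Nat.eq_dec (rearr n w) a then
        (if list_eq_dec Nat.eq_dec (content n w) kap then d (M - Z.of_nat (asc w))%Z w else C0)
        else C0) (words n L)) (words n L)).
  - apply sumC_ext. intros a Ha. assert (Hl : length a = L) by (apply In_words in Ha; tauto).
    rewrite Hl. destruct list_eq_dec as [Hk | Hk].
    + apply sumC_ext. intros w Hw. destruct list_eq_dec as [E | E]; auto.
      subst a. assert (valid n w) by (eapply words_valid; eauto).
      rewrite rearr_content in Hk by auto. destruct list_eq_dec; [| congruence].
      rewrite (proj1 (proj2 (rearr_spec n w H))). auto.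
    + symmetry. apply sumC_zero. intros w Hw. destruct list_eq_dec as [E | E]; auto.
      subst a. assert (valid n w) by (eapply words_valid; eauto).
      rewrite rearr_content in Hk by auto. destruct list_eq_dec; congruence.
  - rewrite sumC_swap. apply sumC_ext. intros w Hw.
    rewrite (sumC_single _ _ (rearr n w)).
    + destruct list_eq_dec; congruence.
    + apply NoDup_words.
    + apply rearr_words; auto.
    + intros a _ Ha. destruct list_eq_dec; congruence.
Qed.

Lemma wF_rearr_le n rho sg tau k w : 1 <= rho -> 0 < sg -> 1 <= tau -> valid n w ->
  wF (rho, sg, tau) k (rearr n w) <= tau ^ (switch_bound n + 1) * wFT (rho, sg, tau) k w.
Proof.
  intros Hr Hs Ht Hv. destruct (rearr_spec n w Hv) as [_ [_ [Hsw Hl]]]. simpl. rewrite Hl.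
  assert (tau ^ splus1 (rearr n w) <= tau ^ (switch_bound n + 1)).
  { apply Rle_pow; auto. destruct (rearr n w); simpl in *; lia. }
  assert (0 <= rho ^ Z.abs_nat k * sg ^ length w) by (apply Rmult_le_pos; apply pow_le; lra).
  nra.
Qed.

Lemma PS_rearr_coef n rho sg tau d N : 1 <= rho -> 0 < sg -> 1 <= tau ->
  PS n (wF (rho, sg, tau)) (rearr_coef n d) N
  <= tau ^ (switch_bound n + 1) * PS n (wFT (rho, sg, tau)) d N.
Proof.
  intros Hr Hs Ht. set (K := tau ^ (switch_bound n + 1)). unfold PS.
  rewrite <- sumR_scal. apply sumR_le. intros k _.
  rewrite <- sumR_scal. apply sumR_le. intros m _. rewrite <- sumR_scal.
  set (wT := wFT (rho, sg, tau) k).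
  transitivity (sumR (fun w' => sumR (fun w => if list_eq_dec Nat.eq_dec (rearr n w) w'
                  then Cnorm (d k w) * (K * wT w) else 0) (words n m)) (words n m)).
  - apply sumR_le. intros w' Hw'. apply In_words in Hw'. destruct Hw' as [_ Hl].
    unfold rearr_coef. rewrite Hl.
    eapply Rle_trans.
    { apply Rmult_le_compat_r; [apply (wF_nonneg None); simpl; lra | apply Cnorm_sumC]. }
    rewrite Rmult_comm, <- sumR_scal. apply sumR_le. intros w Hw.
    destruct list_eq_dec as [E | E]; [| rewrite Cnorm_C0; lra].
    subst w'. pose proof (Cnorm_nonneg (d k w)).
    pose proof (wF_rearr_le n rho sg tau k w Hr Hs Ht (words_valid _ _ _ Hw)). fold K wT in H0. nra.
  - rewrite sumR_swap. apply sumR_le. intros w Hw.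
    rewrite (sumR_single _ _ (rearr n w)).
    + destruct list_eq_dec; [unfold wT; lra | congruence].
    + apply NoDup_words.
    + apply rearr_words; auto.
    + intros a _ Ha. destruct list_eq_dec; congruence.
Qed.

(** * Series indexed by [Z] *)

Lemma infinite_sum_ext f g l : (forall k, f k = g k) -> infinite_sum f l -> infinite_sum g l.
Proof.
  intros H Hf eps He. destruct (Hf eps He) as [N HN]. exists N. intros m Hm.
  rewrite <- (sum_eq f g m) by auto. apply HN; auto.
Qed.

Lemma infinite_sum_plus f g l1 l2 : infinite_sum f l1 -> infinite_sum g l2 ->
  infinite_sum (fun k => f k + g k) (l1 + l2).
Proof.
  intros H1 H2. pose proof (CV_plus _ _ _ _ H1 H2). intros eps He. destruct (H eps He) as [N HN].
  exists N. intros m Hm. rewrite plus_sum. apply HN; auto.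
Qed.

Lemma infinite_sum_unique f l1 l2 : infinite_sum f l1 -> infinite_sum f l2 -> l1 = l2.
Proof. apply uniqueness_sum. Qed.

Lemma sum_f_R0_single f (k0 m : nat) : (forall k, k <> k0 -> f k = 0) ->
  sum_f_R0 f m = if Nat.ltb m k0 then 0 else f k0.
Proof.
  intros H. induction m; simpl.
  - destruct (Nat.ltb_spec 0 k0). apply H; lia. assert (k0 = 0)%nat by lia. subst; auto.
  - rewrite IHm. destruct (Nat.ltb_spec m k0), (Nat.ltb_spec (S m) k0);
    first [lia | rewrite (H (S m)) by lia; ring | (assert (k0 = S m) by lia; subst; ring)].
Qed.

Lemma infinite_sum_single f (k0 : nat) : (forall k, k <> k0 -> f k = 0) -> infinite_sum f (f k0).
Proof.
  intros H eps He. exists k0. intros m Hm. rewrite (sum_f_R0_single f k0 m H).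
  destruct (Nat.ltb_spec m k0); [lia|]. unfold R_dist. rewrite Rminus_diag, Rabs_R0. auto.
Qed.

Lemma infinite_sum_zero f : (forall k, f k = 0) -> infinite_sum f 0.
Proof. intros H. replace 0 with (f 0%nat) by auto. apply infinite_sum_single. auto. Qed.

Lemma CSeries_ext u v L : (forall k, u k = v k) -> CSeries u L -> CSeries v L.
Proof. intros H [H1 H2]. split; eapply infinite_sum_ext; eauto; intros; simpl; rewrite H; auto. Qed.

Lemma ZHasSum_ext f g L : (forall k, f k = g k) -> ZHasSum f L -> ZHasSum g L.
Proof.
  intros H [L1 [L2 [H1 [H2 E]]]]. exists L1, L2.
  split; [|split]; auto; eapply CSeries_ext; eauto; intros; simpl; auto.
Qed.

Lemma ZHasSum_unique f L L' : ZHasSum f L -> ZHasSum f L' -> L = L'.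
Proof.
  intros [L1 [L2 [[A1 A2] [[B1 B2] E]]]] [L1' [L2' [[A1' A2'] [[B1' B2'] E']]]].
  subst. f_equal; apply C_ext; eapply infinite_sum_unique; eauto.
Qed.

Lemma CSeries_plus u v L L' : CSeries u L -> CSeries v L' ->
  CSeries (fun k => Cadd (u k) (v k)) (Cadd L L').
Proof. intros [A1 A2] [B1 B2]. split; simpl; apply infinite_sum_plus; auto. Qed.

Lemma ZHasSum_add f g L L' : ZHasSum f L -> ZHasSum g L' ->
  ZHasSum (fun k => Cadd (f k) (g k)) (Cadd L L').
Proof.
  intros [L1 [L2 [A1 [A2 E]]]] [L1' [L2' [B1 [B2 E']]]]. subst.
  exists (Cadd L1 L1'), (Cadd L2 L2'). split; [|split].
  apply (CSeries_plus (fun k => f (Z.of_nat k)) (fun k => g (Z.of_nat k))); auto.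
  apply (CSeries_plus (fun k => f (- Z.of_nat (S k))%Z) (fun k => g (- Z.of_nat (S k))%Z)); auto.
  Cring.
Qed.

Lemma CSeries_zero u : (forall k, u k = C0) -> CSeries u C0.
Proof.
  intros H. unfold CSeries.
  split; simpl;
    [apply (infinite_sum_zero (fun k => fst (u k))) | apply (infinite_sum_zero (fun k => snd (u k)))];
    intros; rewrite H; auto.
Qed.

Lemma CSeries_single u k0 : (forall k, k <> k0 -> u k = C0) -> CSeries u (u k0).
Proof.
  intros H. unfold CSeries.
  split;
    [apply (infinite_sum_single (fun k => fst (u k))) | apply (infinite_sum_single (fun k => snd (u k)))];
    intros k Hk; rewrite H; auto.
Qed.

Lemma ZHasSum_single f k0 : (forall k, k <> k0 -> f k = C0) -> ZHasSum f (f k0).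
Proof.
  intros H. destruct (Z_le_gt_dec 0 k0).
  - exists (f k0), C0. split; [|split].
    + assert (E : f k0 = f (Z.of_nat (Z.to_nat k0))) by (f_equal; lia). rewrite E.
      apply (CSeries_single (fun k => f (Z.of_nat k))). intros k Hk. apply H. lia.
    + apply CSeries_zero. intros. apply H. lia.
    + Cring.
  - exists C0, (f k0). split; [|split].
    + apply CSeries_zero. intros. apply H. lia.
    + assert (E : f k0 = f (- Z.of_nat (S (Z.to_nat (- k0 - 1))))%Z) by (f_equal; lia). rewrite E.
      apply (CSeries_single (fun k => f (- Z.of_nat (S k))%Z)). intros k Hk. apply H. lia.
    + Cring.
Qed.

Lemma ZHasSum_zero f : (forall k, f k = C0) -> ZHasSum f C0.
Proof. intros H. replace C0 with (f 0%Z) by auto. apply ZHasSum_single. auto. Qed.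

Lemma ZHasSum_pair f k1 k2 : k1 <> k2 -> (forall k, k <> k1 -> k <> k2 -> f k = C0) ->
  ZHasSum f (Cadd (f k1) (f k2)).
Proof.
  intros Hk Hf.
  set (f1 := fun k => if Z.eq_dec k k1 then f k else C0).
  set (f2 := fun k => if Z.eq_dec k k2 then f k else C0).
  apply ZHasSum_ext with (fun k => Cadd (f1 k) (f2 k)).
  { intros k. unfold f1, f2. destruct Z.eq_dec, Z.eq_dec; subst; try congruence;
      rewrite ?Hf by auto; Cring. }
  replace (Cadd (f k1) (f k2)) with (Cadd (f1 k1) (f2 k2))
    by (unfold f1, f2; do 2 destruct Z.eq_dec; congruence).
  apply ZHasSum_add; apply ZHasSum_single; intros k Hk';
    unfold f1, f2; destruct Z.eq_dec; congruence.
Qed.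

Lemma ZHasSum_sumC {A} (F : A -> Z -> C) (L : A -> C) l :
  (forall x, In x l -> ZHasSum (F x) (L x)) -> ZHasSum (fun k => sumC (fun x => F x k) l) (sumC L l).
Proof.
  induction l; simpl; intros H. apply ZHasSum_zero; auto.
  apply ZHasSum_add; auto.
Qed.

Lemma pow2_ge m : INR m + 1 <= 2 ^ m.
Proof.
  induction m; [simpl; lra |].
  rewrite S_INR. simpl. pose proof (pos_INR m). lra.
Qed.

Lemma geometric_small Cc eps : 0 <= Cc -> 0 < eps ->
  exists K : nat, forall m, (K <= m)%nat -> Cc / 2 ^ m <= eps.
Proof.
  intros HC He. destruct (archimed (Cc / eps)) as [H1 _].
  assert (Hq : 0 <= Cc / eps) by (apply Rmult_le_pos; [lra | apply Rlt_le, Rinv_0_lt_compat; lra]).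
  exists (Z.to_nat (up (Cc / eps))). intros m Hm.
  assert (INR m + 1 <= 2 ^ m) by apply pow2_ge.
  assert (Cc / eps <= INR m).
  { apply le_INR in Hm. rewrite INR_IZR_INZ, Z2Nat.id in Hm; [lra |].
    apply le_IZR. lra. }
  assert (0 < 2 ^ m) by (apply pow_lt; lra).
  apply Rmult_le_reg_r with (2 ^ m); auto.
  replace (Cc / 2 ^ m * 2 ^ m) with (eps * (Cc / eps)) by (field; lra).
  apply Rmult_le_compat_l; lra.
Qed.

Definition vanishes_at_infinity (P : Z -> C) : Prop :=
  forall eps, 0 < eps -> exists K : nat, forall k, (Z.of_nat K <= Z.abs k)%Z -> Cnorm (P k) <= eps.

Section Telescope.
Variables (pr : C -> R) (Sq P : Z -> C).
Hypothesis Hpr : forall x, Rabs (pr x) <= Cnorm x.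
Hypothesis Hsub : forall x y, pr (Csub x y) = pr x - pr y.
Hypothesis HS : forall k, Sq k = Csub (P k) (P (k - 1)%Z).
Hypothesis HP : vanishes_at_infinity P.

Lemma telescope_pos : infinite_sum (fun k => pr (Sq (Z.of_nat k))) (- pr (P (-1)%Z)).
Proof.
  assert (E : forall N, sum_f_R0 (fun k => pr (Sq (Z.of_nat k))) N
                        = pr (P (Z.of_nat N)) - pr (P (-1)%Z)).
  { induction N; cbn [sum_f_R0]; rewrite HS, Hsub.
    - replace (Z.of_nat 0 - 1)%Z with (-1)%Z by lia. auto.
    - rewrite IHN. replace (Z.of_nat (S N) - 1)%Z with (Z.of_nat N) by lia. ring. }
  intros eps He. destruct (HP (eps / 2)) as [K HK]; [lra |].
  exists K. intros m Hm. unfold R_dist. rewrite E.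
  replace (pr (P (Z.of_nat m)) - pr (P (-1)%Z) - - pr (P (-1)%Z)) with (pr (P (Z.of_nat m))) by ring.
  eapply Rle_lt_trans; [apply Hpr |]. eapply Rle_lt_trans; [apply HK; lia | lra].
Qed.

Lemma telescope_neg : infinite_sum (fun k => pr (Sq (- Z.of_nat (S k))%Z)) (pr (P (-1)%Z)).
Proof.
  assert (E : forall N, sum_f_R0 (fun k => pr (Sq (- Z.of_nat (S k))%Z)) N
                        = pr (P (-1)%Z) - pr (P (- Z.of_nat (S (S N)))%Z)).
  { induction N; cbn [sum_f_R0]; rewrite HS, Hsub.
    - replace (- Z.of_nat 1 - 1)%Z with (- Z.of_nat 2)%Z by lia.
      replace (- Z.of_nat 1)%Z with (-1)%Z by lia. auto.
    - rewrite IHN. replace (- Z.of_nat (S (S N)) - 1)%Z with (- Z.of_nat (S (S (S N))))%Z by lia.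
      ring. }
  intros eps He. destruct (HP (eps / 2)) as [K HK]; [lra |].
  exists K. intros m Hm. unfold R_dist. rewrite E.
  set (x := P (- Z.of_nat (S (S m)))%Z).
  replace (pr (P (-1)%Z) - pr x - pr (P (-1)%Z)) with (- pr x) by ring.
  rewrite Rabs_Ropp. eapply Rle_lt_trans; [apply Hpr |].
  eapply Rle_lt_trans; [apply HK; lia | lra].
Qed.

End Telescope.

Lemma ZHasSum_telescope (Sq P : Z -> C) L0 : (forall k, Sq k = Csub (P k) (P (k - 1)%Z)) ->
  vanishes_at_infinity P -> ZHasSum Sq L0 -> L0 = C0.
Proof.
  intros HS HP [L1 [L2 [[A1 A2] [[B1 B2] E]]]].
  assert (Hf : forall x y, fst (Csub x y) = fst x - fst y) by (intros; simpl; ring).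
  assert (Hs : forall x y, snd (Csub x y) = snd x - snd y) by (intros; simpl; ring).
  pose proof (telescope_pos fst Sq P Cnorm_fst Hf HS HP) as T1.
  pose proof (telescope_pos snd Sq P Cnorm_snd Hs HS HP) as T2.
  pose proof (telescope_neg fst Sq P Cnorm_fst Hf HS HP) as T3.
  pose proof (telescope_neg snd Sq P Cnorm_snd Hs HS HP) as T4.
  pose proof (infinite_sum_unique _ _ _ A1 T1). pose proof (infinite_sum_unique _ _ _ A2 T2).
  pose proof (infinite_sum_unique _ _ _ B1 T3). pose proof (infinite_sum_unique _ _ _ B2 T4).
  subst. apply C_ext; simpl; lra.
Qed.

(** * Elements with vanishing normal-ordered coefficients lie in the closed ideal *)

Lemma Coef_ext (f g : Coef) : (forall k a, f k a = g k a) -> f = g.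
Proof.
  intros H. apply functional_extensionality; intros k. apply functional_extensionality; intros a.
  auto.
Qed.

Definition monomial (k0 : Z) (a0 : word) (al : C) : Coef := fun k a =>
  if Z.eq_dec k k0 then if list_eq_dec Nat.eq_dec a a0 then al else C0 else C0.

Definition prefixb (x g : word) : bool :=
  if list_eq_dec Nat.eq_dec (firstn (length x) g) x then true else false.
Definition suffixb (y g : word) : bool :=
  andb (Nat.leb (length y) (length g))
       (if list_eq_dec Nat.eq_dec (skipn (length g - length y) g) y then true else false).

Lemma prefixb_true x g : prefixb x g = true -> g = x ++ skipn (length x) g.
Proof.
  unfold prefixb. destruct list_eq_dec as [e|e]; try discriminate. intros _.
  rewrite <- (firstn_skipn (length x) g) at 1. rewrite e. reflexivity.
Qed.

Lemma prefixb_app x r : prefixb x (x ++ r) = true.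
Proof.
  unfold prefixb. rewrite firstn_app, firstn_all, Nat.sub_diag, firstn_O, app_nil_r.
  destruct list_eq_dec; congruence.
Qed.

Lemma suffixb_true y g : suffixb y g = true -> g = firstn (length g - length y) g ++ y.
Proof.
  unfold suffixb. destruct list_eq_dec as [e|e]; [|rewrite andb_false_r; discriminate]. intros _.
  rewrite <- (firstn_skipn (length g - length y) g) at 1. rewrite e. reflexivity.
Qed.

Lemma suffixb_app r y : suffixb y (r ++ y) = true.
Proof.
  unfold suffixb. rewrite length_app.
  replace (length r + length y - length y)%nat with (length r) by lia.
  rewrite skipn_app, skipn_all, Nat.sub_diag, skipn_O. simpl. destruct list_eq_dec; [|congruence].
  apply andb_true_intro; split; auto. apply Nat.leb_le; lia.
Qed.

Lemma firstn_eq_len (x g : word) jj : (jj <= length g)%nat -> firstn jj g = x -> jj = length x.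
Proof. intros H E. subst. rewrite length_firstn. lia. Qed.

Lemma IsProd_monomial_l k0 x al b :
  IsProd (monomial k0 x al) b
    (fun m g => if prefixb x g then Cmul al (b (m - k0)%Z (skipn (length x) g)) else C0).
Proof.
  intros m g.
  set (F := fun k => sumC (fun j => Cmul (monomial k0 x al k (firstn j g)) (b (m - k)%Z (skipn j g)))
                      (seq 0 (S (length g)))).
  assert (HF : ZHasSum F (F k0)).
  { apply ZHasSum_single. intros k Hk. apply sumC_zero. intros jj _. unfold monomial.
    destruct Z.eq_dec; [congruence|]. Cring. }
  replace (if prefixb x g then Cmul al (b (m - k0)%Z (skipn (length x) g)) else C0) with (F k0); auto.
  unfold F, monomial. destruct (prefixb x g) eqn:E.
  - pose proof (prefixb_true _ _ E) as Hg.
    assert (Hl : (length x <= length g)%nat) by (rewrite Hg, length_app; lia).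
    rewrite (sumC_single _ _ (length x)); auto using seq_NoDup.
    + destruct Z.eq_dec; [| congruence]. destruct list_eq_dec as [_ | Hne]; auto.
      exfalso. apply Hne. rewrite Hg, firstn_app, firstn_all, Nat.sub_diag, firstn_O, app_nil_r.
      auto.
    + apply in_seq; lia.
    + intros jj Hjj Hne. apply in_seq in Hjj. destruct Z.eq_dec; [| congruence].
      destruct list_eq_dec; [| Cring].
      exfalso. apply Hne. apply firstn_eq_len with g; auto; lia.
  - apply sumC_zero. intros jj Hjj. apply in_seq in Hjj.
    destruct Z.eq_dec; [| Cring]. destruct list_eq_dec; [| Cring].
    assert (jj = length x) by (apply firstn_eq_len with g; auto; lia). subst jj.
    unfold prefixb in E. destruct list_eq_dec; congruence.
Qed.

Lemma IsProd_monomial_r a k0 y be :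
  IsProd a (monomial k0 y be)
    (fun m g => if suffixb y g then Cmul (a (m - k0)%Z (firstn (length g - length y) g)) be else C0).
Proof.
  intros m g.
  set (F := fun k => sumC (fun j => Cmul (a k (firstn j g)) (monomial k0 y be (m - k)%Z (skipn j g)))
                      (seq 0 (S (length g)))).
  assert (HF : ZHasSum F (F (m - k0)%Z)).
  { apply ZHasSum_single. intros k Hk. apply sumC_zero. intros jj _. unfold monomial.
    destruct Z.eq_dec; [lia|]. Cring. }
  replace (if suffixb y g then Cmul (a (m - k0)%Z (firstn (length g - length y) g)) be else C0)
    with (F (m - k0)%Z); auto.
  unfold F, monomial. replace (m - (m - k0))%Z with k0 by lia.
  destruct (suffixb y g) eqn:E.
  - pose proof (suffixb_true _ _ E) as Hg.
    assert (Hl : (length y <= length g)%nat) by (rewrite Hg, length_app; lia).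
    rewrite (sumC_single _ _ (length g - length y)%nat); auto using seq_NoDup.
    + destruct Z.eq_dec; [| congruence]. destruct list_eq_dec as [_ | Hne]; auto.
      exfalso. apply Hne. unfold suffixb in E. destruct list_eq_dec; auto.
      rewrite andb_false_r in E; discriminate.
    + apply in_seq; lia.
    + intros jj Hjj Hne. apply in_seq in Hjj. destruct Z.eq_dec; [| congruence].
      destruct list_eq_dec as [Ey |]; [| Cring].
      exfalso. apply Hne. rewrite <- Ey, length_skipn. lia.
  - apply sumC_zero. intros jj Hjj. apply in_seq in Hjj.
    destruct Z.eq_dec; [| Cring]. destruct list_eq_dec as [Ey |]; [| Cring].
    assert (jj = length g - length y)%nat by (rewrite <- Ey, length_skipn; lia). subst jj.
    rewrite <- (firstn_skipn (length g - length y) g), Ey, suffixb_app in E. discriminate.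
Qed.

Definition middle (x y g : word) : option word :=
  if suffixb y g then
    if prefixb x (firstn (length g - length y) g)
    then Some (skipn (length x) (firstn (length g - length y) g)) else None
  else None.

Lemma middle_app x s y : middle x y (x ++ s ++ y) = Some s.
Proof.
  unfold middle. rewrite app_assoc, suffixb_app.
  assert (E : firstn (length ((x ++ s) ++ y) - length y) ((x ++ s) ++ y) = x ++ s).
  { rewrite length_app.
    replace (length (x ++ s) + length y - length y)%nat with (length (x ++ s)) by lia.
    rewrite firstn_app, firstn_all, Nat.sub_diag, firstn_O, app_nil_r. auto. }
  rewrite E, prefixb_app, skipn_app, skipn_all, Nat.sub_diag, skipn_O. auto.
Qed.

Lemma middle_Some x y g s : middle x y g = Some s -> g = x ++ s ++ y.
Proof.
  unfold middle. destruct (suffixb y g) eqn:Es; [| discriminate].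
  destruct prefixb eqn:Ep; [| discriminate]. intros [= <-].
  rewrite app_assoc, <- (prefixb_true _ _ Ep). apply suffixb_true; auto.
Qed.

Lemma middle_None x y g s : middle x y g = None -> g <> x ++ s ++ y.
Proof. intros H ->. rewrite middle_app in H. discriminate. Qed.

Lemma gen_val i j d s : i <> j -> gen i j d s =
  if list_eq_dec Nat.eq_dec s (i :: j :: nil) then (if Z.eq_dec d 0 then C1 else C0)
  else if list_eq_dec Nat.eq_dec s (j :: i :: nil) then (if Z.eq_dec d 1 then Copp C1 else C0)
  else C0.
Proof.
  intros Hij. unfold gen.
  destruct (list_eq_dec Nat.eq_dec s (i :: j :: nil)) as [E | E];
  destruct (list_eq_dec Nat.eq_dec s (j :: i :: nil)) as [F | F];
  [subst; injection F; intros; congruence | | |];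
  destruct (Z.eqb_spec d 0); destruct (Z.eqb_spec d 1); simpl;
  repeat destruct Z.eq_dec; try lia; auto.
Qed.

Lemma gen_len i j d s : i <> j -> length s <> 2%nat -> gen i j d s = C0.
Proof.
  intros H Hl. rewrite gen_val by auto.
  repeat destruct list_eq_dec; auto; subst; simpl in Hl; lia.
Qed.

Lemma gen_deg i j d s : i <> j -> d <> 0%Z -> d <> 1%Z -> gen i j d s = C0.
Proof.
  intros H H0 H1. rewrite gen_val by auto.
  repeat (destruct list_eq_dec || destruct Z.eq_dec); congruence.
Qed.

Lemma Cnorm_gen i j d s : i <> j -> Cnorm (gen i j d s) <= 1.
Proof.
  intros H. rewrite gen_val by auto.
  repeat (destruct list_eq_dec || destruct Z.eq_dec); rewrite ?Cnorm_opp, ?Cnorm_C1, ?Cnorm_C0; lra.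
Qed.

Lemma IsProd_ext a b c c' : IsProd a b c -> (forall m g, c m g = c' m g) -> IsProd a b c'.
Proof. intros H E m g. rewrite <- E. apply H. Qed.

(** The product [z^k zeta_x (zeta_i zeta_j - z zeta_j zeta_i) zeta_y]. *)
Definition gen_sandwich (k : Z) (x y : word) (i j : nat) (al : C) : Coef := fun m g =>
  match middle x y g with Some s => Cmul al (gen i j (m - k)%Z s) | None => C0 end.

Lemma IsProd_gen_sandwich k x y i j al :
  exists t, IsProd (monomial k x al) (gen i j) t /\
            IsProd t (monomial 0 y C1) (gen_sandwich k x y i j al).
Proof.
  set (t := fun m g => if prefixb x g then Cmul al (gen i j (m - k)%Z (skipn (length x) g)) else C0).
  exists t. split; [apply IsProd_monomial_l |].
  eapply IsProd_ext; [apply IsProd_monomial_r |]. intros m g. simpl.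
  unfold gen_sandwich, middle, t. replace (m - 0)%Z with m by lia.
  destruct suffixb; [destruct prefixb |]; Cring.
Qed.

Lemma gen_sandwich_eq k x y i j al : (i < j)%nat -> forall m g,
  gen_sandwich k x y i j al m g =
  Csub (monomial k (x ++ i :: j :: y) al m g) (monomial (k + 1) (x ++ j :: i :: y) al m g).
Proof.
  intros Hij m g. unfold gen_sandwich, monomial.
  destruct (middle x y g) as [s |] eqn:Em.
  - apply middle_Some in Em. subst g. rewrite gen_val by lia.
    assert (Happ : forall s', x ++ s ++ y = x ++ s' ++ y <-> s = s').
    { split; [intros E; apply app_inv_head, app_inv_tail in E | intros ->]; auto. }
    change (i :: j :: y) with ((i :: j :: nil) ++ y).
    change (j :: i :: y) with ((j :: i :: nil) ++ y).
    destruct (list_eq_dec Nat.eq_dec s (i :: j :: nil)) as [-> | Hs1];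
    [| destruct (list_eq_dec Nat.eq_dec s (j :: i :: nil)) as [-> | Hs2]];
    repeat destruct Z.eq_dec; try lia;
    repeat match goal with
      |- context [list_eq_dec ?d ?u ?v] => destruct (list_eq_dec d u v) as [E | E];
                                           [apply Happ in E | ]
    end; try (injection E; lia); try congruence; Cring.
  - pose proof (middle_None _ _ _ (i :: j :: nil) Em).
    pose proof (middle_None _ _ _ (j :: i :: nil) Em).
    simpl in *. repeat destruct Z.eq_dec; repeat destruct list_eq_dec; try congruence; Cring.
Qed.

Section Ideal.
Variables (n : nat) (r : option R) (W : param -> Z -> word -> R).
Hypothesis HW : forall p, adm r p -> nonneg_weight (W p).

Lemma InJ_ext y y' : InJ n r W y -> (forall k a, y k a = y' k a) -> InJ n r W y'.
Proof. intros H E. rewrite <- (Coef_ext _ _ E). auto. Qed.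

Lemma InJ_zero y : (forall k a, y k a = C0) -> InJ n r W y.
Proof. intros H. apply InJ_ext with czero. constructor. intros; rewrite H; auto. Qed.

Lemma InJ_add y1 y2 : InJ n r W y1 -> InJ n r W y2 -> InJ n r W (cadd y1 y2).
Proof.
  intros H1 H2. induction H2 as [| x u v t w i j y Hx IH Hu Hv Hij Hjn Ht Hw Hy].
  - apply InJ_ext with y1; auto. intros; unfold cadd, czero; Cring.
  - apply (JS n r W (cadd y1 x) u v t w i j); auto.
    intros k a. unfold cadd. rewrite Hy. Cring.
Qed.

Lemma InJ_sum {A} (F : A -> Coef) l : (forall z, In z l -> InJ n r W (F z)) ->
  InJ n r W (fun k a => sumC (fun z => F z k a) l).
Proof.
  induction l; simpl; intros H. apply InJ_zero; auto.
  apply InJ_ext with (cadd (F a) (fun k a0 => sumC (fun z => F z k a0) l)).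
  - apply InJ_add; auto.
  - intros; unfold cadd; auto.
Qed.

Lemma monomial_InSp k0 a0 al : valid n a0 -> InSp n r W (monomial k0 a0 al).
Proof.
  intros Hv. split.
  - intros k a Ha. unfold monomial. destruct Z.eq_dec; auto. destruct list_eq_dec; auto.
    subst; contradiction.
  - intros p Hp. exists (Cnorm al * W p k0 a0). intros N. rewrite PS_box.
    assert (Hz : forall x, In x (box n N) -> x <> (k0, a0) ->
       Cnorm (monomial k0 a0 al (fst x) (snd x)) * W p (fst x) (snd x) = 0).
    { intros [k a] _ Hx. unfold monomial; simpl. destruct Z.eq_dec; [destruct list_eq_dec |].
      subst; congruence. all: rewrite Cnorm_C0; ring. }
    pose proof (HW p Hp k0 a0). pose proof (Cnorm_nonneg al).
    destruct (in_dec ZW_eq_dec (k0, a0) (box n N)).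
    + rewrite (sumR_single _ _ (k0, a0)); auto using NoDup_box. simpl. unfold monomial.
      destruct Z.eq_dec; [| congruence]. destruct list_eq_dec; [| congruence]. lra.
    + rewrite (sumR_single_out _ _ (k0, a0)); auto. nra.
Qed.

Lemma gen_InJ x y i j k al : valid n x -> valid n y -> (i < j)%nat -> (j < n)%nat ->
  InJ n r W (fun m g => Csub (monomial k (x ++ i :: j :: y) al m g)
                             (monomial (k + 1) (x ++ j :: i :: y) al m g)).
Proof.
  intros Hx Hy Hij Hjn. destruct (IsProd_gen_sandwich k x y i j al) as [t [Ht Hw]].
  apply (JS n r W czero (monomial k x al) (monomial 0 y C1) t (gen_sandwich k x y i j al) i j);
    auto using monomial_InSp; [constructor |].
  intros m g. rewrite gen_sandwich_eq by auto. unfold czero. Cring.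
Qed.
End Ideal.

Lemma monomial_C0 M b k a : monomial M b C0 k a = C0.
Proof. unfold monomial. destruct Z.eq_dec; [destruct list_eq_dec |]; auto. Qed.

Section NormalForm.
Variables (n : nat) (r : option R) (W : param -> Z -> word -> R).
Hypothesis HW : forall p, adm r p -> nonneg_weight (W p).

Lemma bubble_sort_InJ a : valid n a ->
  exists a0, asc a0 = 0%nat /\ (forall x, occ a0 x = occ a x) /\
  forall k al, InJ n r W (fun m g => Csub (monomial k a al m g)
                                         (monomial (k + Z.of_nat (asc a)) a0 al m g)).
Proof.
  remember (asc a) as d eqn:Hd. revert a Hd.
  induction d as [d IH] using lt_wf_ind. intros a Hd Hv.
  destruct (Nat.eq_dec d 0) as [-> | Hd0].
  { exists a. repeat split; auto. intros k al. apply InJ_zero; auto.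
    intros m g. replace (k + Z.of_nat 0)%Z with k by lia. Cring. }
  destruct (adjacent_ascent a) as [x [i [j [y [Ea Hij]]]]]; [lia |].
  set (a' := x ++ j :: i :: y).
  assert (Hs : asc a = S (asc a')).
  { pose proof (asc_swap x i j y) as Hs. rewrite <- Ea in Hs.
    rewrite (proj2 (Nat.ltb_ge j i)), (proj2 (Nat.ltb_lt i j)) in Hs by lia. fold a' in Hs. lia. }
  assert (Hva : valid n x /\ valid n (i :: j :: y)) by (apply Forall_app; rewrite <- Ea; auto).
  destruct Hva as [Hvx Hvr]. inversion Hvr as [| ? ? Hi Hvr']. inversion Hvr' as [| ? ? Hj Hvy].
  assert (Hv' : valid n a') by (apply Forall_app; split; auto; repeat constructor; auto).
  destruct (IH (asc a') ltac:(lia) a' eq_refl Hv') as [a0 [Ha0 [Hc0 HJ]]].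
  exists a0. split; [| split]; auto.
  - intros z. rewrite Hc0, Ea. unfold a'. rewrite !occ_app. unfold occ; simpl.
    repeat destruct Nat.eq_dec; lia.
  - intros k al.
    apply InJ_ext with (cadd (fun m g => Csub (monomial k (x ++ i :: j :: y) al m g)
                                              (monomial (k + 1) a' al m g))
                             (fun m g => Csub (monomial (k + 1) a' al m g)
                                              (monomial (k + 1 + Z.of_nat (asc a')) a0 al m g))).
    + apply InJ_add; auto. apply gen_InJ; auto.
    + intros m g. unfold cadd. rewrite <- Ea.
      replace (k + 1 + Z.of_nat (asc a'))%Z with (k + Z.of_nat d)%Z by lia. Cring.
Qed.

Lemma normal_word_ex kap : exists a0,
  (exists b, valid n b /\ asc b = 0%nat /\ content n b = kap) ->
  valid n a0 /\ asc a0 = 0%nat /\ content n a0 = kap.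
Proof.
  destruct (classic (exists b, valid n b /\ asc b = 0%nat /\ content n b = kap)) as [[b Hb] | H].
  - exists b; auto.
  - exists nil; intros; contradiction.
Qed.

(** The non-increasing word with letter counts [kap] (junk if [kap] is not
    the content of a valid word). *)
Definition normal_word kap : word :=
  proj1_sig (constructive_indefinite_description _ (normal_word_ex kap)).

Lemma normal_word_eq a0 : valid n a0 -> asc a0 = 0%nat -> a0 = normal_word (content n a0).
Proof.
  intros Hv Ha. unfold normal_word. destruct constructive_indefinite_description as [b Hb]. simpl.
  destruct Hb as [Hb1 [Hb2 Hb3]]; [exists a0; auto |].
  apply asc0_unique; auto. apply content_occ with n; auto.
Qed.

Lemma monomial_normal_InJ a k al : valid n a ->
  InJ n r W (fun m g => Csub (monomial k a al m g)
                             (monomial (k + Z.of_nat (asc a)) (normal_word (content n a)) al m g)).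
Proof.
  intros Hv. destruct (bubble_sort_InJ a Hv) as [a0 [Ha0 [Hc0 HJ]]].
  assert (Hv0 : valid n a0) by (apply valid_occ_transfer with a; auto).
  rewrite (normal_word_eq a0), (occ_content n a0 a) in HJ; auto.
Qed.

Definition class_of (k : Z) (a : word) : Z * list nat * nat :=
  ((k + Z.of_nat (asc a))%Z, content n a, length a).

Definition class_eq_dec : forall x y : Z * list nat * nat, {x = y} + {x <> y}.
Proof.
  decide equality. apply Nat.eq_dec. decide equality. apply list_eq_dec, Nat.eq_dec. apply Z.eq_dec.
  Defined.

(** The part of [c] supported on the finite class [(M, kap, L)] of the
    monomials [z^k zeta_a] with [k + asc a = M], letter counts [kap] and
    length [L]; [ncoef n c M kap L] is the sum of its coefficients. *)
Definition class_part (c : Coef) (R0 : Z * list nat * nat) (k : Z) (a : word) : C :=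
  let '(M, kap, L) := R0 in
  sumC (fun a' => if list_eq_dec Nat.eq_dec (content n a') kap
                  then monomial (M - Z.of_nat (asc a')) a' (c (M - Z.of_nat (asc a'))%Z a') k a
                  else C0) (words n L).

Definition class_trunc (c : Coef) (Reps : list (Z * list nat * nat)) : Coef :=
  fun k a => sumC (fun R0 => class_part c R0 k a) Reps.

Lemma monomial_sumC {A} M b (f : A -> C) l k a :
  sumC (fun z => monomial M b (f z) k a) l = monomial M b (sumC f l) k a.
Proof.
  unfold monomial. destruct Z.eq_dec; [destruct list_eq_dec |]; auto.
  all: apply sumC_zero; auto.
Qed.

Lemma class_part_decomp c M kap L k a :
  class_part c (M, kap, L) k a =
  Cadd (sumC (fun a' => if list_eq_dec Nat.eq_dec (content n a') kap then
                Csub (monomial (M - Z.of_nat (asc a')) a' (c (M - Z.of_nat (asc a'))%Z a') k a)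
                     (monomial M (normal_word kap) (c (M - Z.of_nat (asc a'))%Z a') k a)
              else C0) (words n L))
       (monomial M (normal_word kap) (ncoef n c M kap L) k a).
Proof.
  unfold class_part, ncoef. rewrite <- monomial_sumC, <- sumC_add. apply sumC_ext. intros a' _.
  destruct list_eq_dec; [| rewrite monomial_C0]; Cring.
Qed.

Lemma class_part_InJ c R0 : (forall M kap L, ncoef n c M kap L = C0) ->
  InJ n r W (class_part c R0).
Proof.
  intros Hncoef. destruct R0 as [[M kap] L].
  apply InJ_ext with (fun k a => sumC (fun a' => (if list_eq_dec Nat.eq_dec (content n a') kap then
      fun m g => Csub (monomial (M - Z.of_nat (asc a')) a' (c (M - Z.of_nat (asc a'))%Z a') m g)
                      (monomial M (normal_word kap) (c (M - Z.of_nat (asc a'))%Z a') m g)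
    else czero) k a) (words n L)).
  - apply InJ_sum. intros a' Ha'. destruct list_eq_dec as [<- |]; [| constructor].
    pose proof (monomial_normal_InJ a' (M - Z.of_nat (asc a'))%Z (c (M - Z.of_nat (asc a'))%Z a')
                  (words_valid _ _ _ Ha')) as HJ.
    replace (M - Z.of_nat (asc a') + Z.of_nat (asc a'))%Z with M in HJ by lia. exact HJ.
  - intros k a. rewrite class_part_decomp, Hncoef, monomial_C0.
    replace (fun a' => _) with (fun a' => if list_eq_dec Nat.eq_dec (content n a') kap then
        Csub (monomial (M - Z.of_nat (asc a')) a' (c (M - Z.of_nat (asc a'))%Z a') k a)
             (monomial M (normal_word kap) (c (M - Z.of_nat (asc a'))%Z a') k a) else C0).
    + Cring.
    + apply functional_extensionality. intros a'. destruct list_eq_dec; auto.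
Qed.

Lemma class_trunc_InJ c Reps : (forall M kap L, ncoef n c M kap L = C0) ->
  InJ n r W (class_trunc c Reps).
Proof. intros Hncoef. apply InJ_sum. intros R0 _. apply class_part_InJ; auto. Qed.
End NormalForm.

Lemma class_part_other n c R0 k a : R0 <> class_of n k a -> class_part n c R0 k a = C0.
Proof.
  intros H. destruct R0 as [[M kap] L]. unfold class_part. apply sumC_zero. intros a' Ha'.
  destruct list_eq_dec; auto. unfold monomial.
  destruct Z.eq_dec; auto. destruct list_eq_dec; auto. subst a'. exfalso. apply H.
  apply In_words in Ha'. destruct Ha'. subst. unfold class_of. repeat f_equal. lia.
Qed.

Lemma class_part_own n c k a : valid n a -> class_part n c (class_of n k a) k a = c k a.
Proof.
  intros Hv. unfold class_part, class_of.
  rewrite (sumC_single _ _ a); auto using NoDup_words.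
  - destruct list_eq_dec; [| congruence]. unfold monomial.
    replace (k + Z.of_nat (asc a) - Z.of_nat (asc a))%Z with k by lia.
    destruct Z.eq_dec; [| congruence]. destruct list_eq_dec; congruence.
  - apply In_words; auto.
  - intros a' _ Ha'. destruct list_eq_dec; auto. unfold monomial.
    destruct Z.eq_dec; auto. destruct list_eq_dec; congruence.
Qed.

Lemma class_trunc_in n c Reps k a : NoDup Reps -> valid n a -> In (class_of n k a) Reps ->
  class_trunc n c Reps k a = c k a.
Proof.
  intros Hn Hv Hin. unfold class_trunc.
  rewrite (sumC_single _ _ (class_of n k a)); auto using class_part_own.
  intros; apply class_part_other; auto.
Qed.

Lemma class_trunc_out n c Reps k a : ~ In (class_of n k a) Reps -> class_trunc n c Reps k a = C0.
Proof. intros Hin. eapply sumC_single_out; eauto. intros; apply class_part_other; auto. Qed.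

Lemma class_trunc_invalid n c Reps k a : ~ valid n a -> class_trunc n c Reps k a = C0.
Proof.
  intros Hv. apply sumC_zero. intros [[M kap] L] _. apply sumC_zero. intros a' Ha'.
  destruct list_eq_dec; auto. unfold monomial. destruct Z.eq_dec; auto.
  destruct list_eq_dec; auto. subst. apply words_valid in Ha'. contradiction.
Qed.

Lemma PS_tail n w c f N0 N' : nonneg_weight w ->
  (forall k a, In (k, a) (box n N0) -> f k a = C0) ->
  (forall k a, Cnorm (f k a) <= Cnorm (c k a)) ->
  PS n w f N' <= Rmax 0 (PS n w c N' - PS n w c N0).
Proof.
  intros Hw Hf Hc. destruct (Nat.le_ge_cases N' N0).
  - apply Rle_trans with 0; [| apply Rmax_l]. rewrite PS_box. rewrite sumR_zero; [lra |].
    intros [k a] Hx. simpl. rewrite Hf. rewrite Cnorm_C0; ring. eapply box_incl; eauto.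
  - apply Rle_trans with (PS n w c N' - PS n w c N0); [| apply Rmax_r]. rewrite !PS_box.
    rewrite <- (sumR_indicator ZW_eq_dec _ (box n N0) (box n N')); auto using NoDup_box, box_incl.
    rewrite <- sumR_minus. apply sumR_le. intros [k a] Hx. cbn [fst snd]. destruct in_dec.
    + rewrite Hf; auto. rewrite Cnorm_C0. lra.
    + pose proof (Hc k a). pose proof (Hw k a). nra.
Qed.

Lemma PS_cauchy n w c Mb : (forall N, PS n w c N <= Mb) ->
  forall eps, 0 < eps -> exists N0, forall N', PS n w c N' - PS n w c N0 <= eps.
Proof.
  intros HM eps He.
  destruct (completeness (fun x => exists N, x = PS n w c N)) as [m [Hm1 Hm2]].
  - exists Mb. intros x [N ->]. auto.
  - exists (PS n w c 0). eauto.
  - destruct (classic (exists N0, m - eps < PS n w c N0)) as [[N0 HN0] | H].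
    + exists N0. intros N'. assert (PS n w c N' <= m) by (apply Hm1; eauto). lra.
    + exfalso. assert (m <= m - eps).
      { apply Hm2. intros x [N ->]. apply Rnot_lt_le. intros Hc. apply H. eauto. }
      lra.
Qed.

(** The approximants are the truncations of [c] to the finitely many
    classes meeting a large box. *)
Lemma InI_of_ncoef_zero n r W c : (forall p, adm r p -> nonneg_weight (W p)) ->
  InSp n r W c -> (forall M kap L, ncoef n c M kap L = C0) -> InI n r W c.
Proof.
  intros HW Hc Hncoef. split; auto. intros p Hp eps He.
  destruct (proj2 Hc p Hp) as [Mb HMb].
  destruct (PS_cauchy n (W p) c Mb HMb eps He) as [N0 HN0].
  set (Reps := nodup class_eq_dec (map (fun ka => class_of n (fst ka) (snd ka)) (box n N0))).
  assert (HR : NoDup Reps) by apply NoDup_nodup.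
  exists (class_trunc n c Reps). split; [apply class_trunc_InJ; auto |].
  intros N'. eapply Rle_trans; [apply (PS_tail n (W p) c _ N0 N'); auto |].
  - intros k a Hka. unfold csub. apply In_box in Hka.
    rewrite class_trunc_in; try tauto; [Cring |].
    apply nodup_In, in_map_iff. exists (k, a). split; auto. apply In_box; auto.
  - intros k a. unfold csub. destruct (classic (valid n a)) as [Hv | Hv].
    + destruct (in_dec class_eq_dec (class_of n k a) Reps).
      * rewrite class_trunc_in by auto. replace (Csub (c k a) (c k a)) with C0 by Cring.
        rewrite Cnorm_C0. apply Cnorm_nonneg.
      * rewrite class_trunc_out by auto. replace (Csub (c k a) C0) with (c k a) by Cring. lra.
    + rewrite class_trunc_invalid by auto. replace (Csub (c k a) C0) with (c k a) by Cring. lra.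
  - apply Rmax_lub; [lra | apply HN0].
Qed.

(** * Normal-ordered coefficients vanish on the closed ideal *)

Lemma IsProd_gen_r u i j t : i <> j -> IsProd u (gen i j) t -> forall m g,
  t m g =
  if Nat.leb 2 (length g) then
    Cadd (Cmul (u m (firstn (length g - 2) g)) (gen i j 0%Z (skipn (length g - 2) g)))
         (Cmul (u (m - 1)%Z (firstn (length g - 2) g)) (gen i j 1%Z (skipn (length g - 2) g)))
  else C0.
Proof.
  intros Hij H m g. specialize (H m g).
  eapply ZHasSum_unique; [exact H|].
  set (x := firstn (length g - 2) g). set (s := skipn (length g - 2) g).
  set (G := fun k => if Nat.leb 2 (length g) then Cmul (u k x) (gen i j (m - k)%Z s) else C0).
  apply ZHasSum_ext with G.
  { intros k. unfold G. destruct (Nat.leb_spec 2 (length g)); symmetry.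
    - rewrite (sumC_single _ _ (length g - 2)%nat); auto using seq_NoDup.
      + apply in_seq; lia.
      + intros jj Hjj Hne. apply in_seq in Hjj.
        rewrite gen_len by (auto; rewrite length_skipn; lia). Cring.
    - apply sumC_zero. intros jj Hjj. apply in_seq in Hjj.
      rewrite gen_len by (auto; rewrite length_skipn; lia). Cring. }
  replace (if Nat.leb 2 (length g) then _ else C0) with (Cadd (G m) (G (m - 1)%Z)).
  - apply ZHasSum_pair; [lia |]. intros k Hk1 Hk2. unfold G.
    destruct Nat.leb; [rewrite gen_deg by lia |]; Cring.
  - unfold G. replace (m - m)%Z with 0%Z by lia. replace (m - (m - 1))%Z with 1%Z by lia.
    destruct (Nat.leb 2 (length g)); Cring.
Qed.

Definition geometric_minorant (r : option R) (W : param -> Z -> word -> R) :=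
  exists p sg, adm r p /\ 0 < sg /\ forall k a, 2 ^ Z.abs_nat k * sg ^ length a <= W p k a.

Lemma InSp_coef_bound n r W p sg u : adm r p -> 0 < sg ->
  (forall k a, 2 ^ Z.abs_nat k * sg ^ length a <= W p k a) -> InSp n r W u ->
  exists B, 0 <= B /\ forall k a, Cnorm (u k a) * (2 ^ Z.abs_nat k * sg ^ length a) <= B.
Proof.
  intros Hp Hs HW [Hu1 Hu2]. destruct (Hu2 p Hp) as [B HB].
  assert (Hpos : nonneg_weight (W p)).
  { intros k a. eapply Rle_trans; [| apply HW]. apply Rmult_le_pos; apply pow_le; lra. }
  pose proof (PS_nonneg n (W p) u 0 Hpos). pose proof (HB 0%nat).
  exists B. split; [lra |].
  intros k a. destruct (classic (valid n a)) as [Hv | Hv].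
  - destruct (box_exists n k a Hv) as [N HN]. eapply Rle_trans; [| apply (HB N)].
    eapply Rle_trans; [| apply PS_term; eauto].
    apply Rmult_le_compat_l; [apply Cnorm_nonneg | apply HW].
  - rewrite Hu1, Cnorm_C0 by auto. lra.
Qed.

Lemma swap_at_words n L p a : In a (words n L) -> In (swap_at p a) (words n L).
Proof.
  intros H. apply In_words in H. destruct H as [Hv Hl]. apply In_words. split.
  - apply valid_occ_transfer with a; auto. intros; symmetry; apply swap_at_occ.
  - rewrite swap_at_length; auto.
Qed.

(** For a product [(u g_ij) v], [ncoef] is the sum over [k] of the slices in
    which [u g_ij] carries the power [z^k].  The part of slice [k] coming from
    the term [- z zeta_j zeta_i] of [g_ij] cancels, after swapping the two
    letters, the part of slice [k - 1] coming from [zeta_i zeta_j]: the slices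
    telescope. *)
Section ProductWithGen.
Variables (n : nat) (u v : Coef) (i j : nat) (M : Z) (kap : list nat) (L : nat).
Hypothesis Hij : (i < j)%nat.

Definition gen0_term (k : Z) (a : word) (jj : nat) : C :=
  if Nat.leb 2 jj then
    Cmul (Cmul (u k (firstn (jj - 2) a)) (gen i j 0%Z (skipn (jj - 2) (firstn jj a))))
         (v (M - Z.of_nat (asc a) - k)%Z (skipn jj a))
  else C0.

Definition gen1_term (k : Z) (a : word) (jj : nat) : C :=
  if Nat.leb 2 jj then
    Cmul (Cmul (u (k - 1)%Z (firstn (jj - 2) a)) (gen i j 1%Z (skipn (jj - 2) (firstn jj a))))
         (v (M - Z.of_nat (asc a) - k)%Z (skipn jj a))
  else C0.

Definition content_sum (f : word -> nat -> C) : C :=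
  sumC (fun jj => sumC (fun a => if list_eq_dec Nat.eq_dec (content n a) kap then f a jj else C0)
                       (words n L)) (seq 0 (S L)).

Definition slice (t : Coef) (k : Z) : C :=
  sumC (fun a => if list_eq_dec Nat.eq_dec (content n a) kap then
           sumC (fun jj => Cmul (t k (firstn jj a)) (v (M - Z.of_nat (asc a) - k)%Z (skipn jj a)))
                (seq 0 (S (length a)))
         else C0) (words n L).

Lemma split_pair_parts (X : word) (c1 c2 : nat) (Y : word) :
  firstn (length X + 2 - 2) (X ++ c1 :: c2 :: Y) = X /\
  skipn (length X + 2 - 2) (firstn (length X + 2) (X ++ c1 :: c2 :: Y)) = c1 :: c2 :: nil /\
  skipn (length X + 2) (X ++ c1 :: c2 :: Y) = Y.
Proof.
  replace (length X + 2 - 2)%nat with (length X) by lia.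
  split; [|split].
  - rewrite firstn_app, firstn_all, Nat.sub_diag, firstn_O, app_nil_r. auto.
  - rewrite firstn_app, (firstn_all2 X) by lia.
    replace (length X + 2 - length X)%nat with 2%nat by lia. simpl.
    rewrite skipn_app, skipn_all, Nat.sub_diag. auto.
  - rewrite skipn_app, skipn_all2 by lia. replace (length X + 2 - length X)%nat with 2%nat by lia.
    auto.
Qed.

Lemma gen1_term_swap k (X : word) (c1 c2 : nat) (Y : word) :
  gen1_term k (X ++ c1 :: c2 :: Y) (length X + 2)
  = Copp (gen0_term (k - 1) (X ++ c2 :: c1 :: Y) (length X + 2)).
Proof.
  unfold gen1_term, gen0_term.
  replace (Nat.leb 2 (length X + 2)) with true by (symmetry; apply Nat.leb_le; lia).
  destruct (split_pair_parts X c1 c2 Y) as [E1 [E2 E3]].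
  destruct (split_pair_parts X c2 c1 Y) as [F1 [F2 F3]].
  rewrite E1, E2, E3, F1, F2, F3.
  assert (Hne : i <> j) by lia.
  rewrite !gen_val by auto.
  destruct (list_eq_dec Nat.eq_dec (c1 :: c2 :: nil) (j :: i :: nil)) as [E|E].
  - injection E; intros; subst c1 c2.
    destruct (list_eq_dec Nat.eq_dec (j :: i :: nil) (i :: j :: nil)) as [G|G].
    injection G; intros; lia.
    destruct (list_eq_dec Nat.eq_dec (i :: j :: nil) (i :: j :: nil)) as [_|G']; [|congruence].
    destruct (Z.eq_dec 1 1); [|congruence]. destruct (Z.eq_dec 0 0); [|congruence].
    assert (Hs : asc (X ++ i :: j :: Y) = (asc (X ++ j :: i :: Y) + 1)%nat)
      by (pose proof (asc_swap X j i Y); destruct (Nat.ltb_spec i j); destruct (Nat.ltb_spec j i); lia).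
    replace (M - Z.of_nat (asc (X ++ i :: j :: Y)) - (k - 1))%Z
      with (M - Z.of_nat (asc (X ++ j :: i :: Y)) - k)%Z by lia.
    Cring.
  - destruct (list_eq_dec Nat.eq_dec (c2 :: c1 :: nil) (i :: j :: nil)) as [G|G].
    { injection G; intros H1 H2; exfalso; apply E; rewrite H1, H2; reflexivity. }
    repeat match goal with |- context [list_eq_dec ?d ?x ?y] => destruct (list_eq_dec d x y) end;
    repeat match goal with |- context [Z.eq_dec ?x ?y] => destruct (Z.eq_dec x y) end;
      try lia; try congruence; Cring.
Qed.

Lemma slices_sum t w : IsProd t v w -> ZHasSum (slice t) (ncoef n w M kap L).
Proof.
  intros Hw. unfold slice, ncoef.
  apply (ZHasSum_sumC (fun a k => if list_eq_dec Nat.eq_dec (content n a) kap then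
      sumC (fun jj => Cmul (t k (firstn jj a)) (v (M - Z.of_nat (asc a) - k)%Z (skipn jj a)))
           (seq 0 (S (length a))) else C0)).
  intros a Ha. destruct list_eq_dec.
  - apply (Hw (M - Z.of_nat (asc a))%Z a).
  - apply ZHasSum_zero; auto.
Qed.

Lemma slice_split t k : IsProd u (gen i j) t ->
  slice t k = Cadd (content_sum (gen0_term k)) (content_sum (gen1_term k)).
Proof.
  intros Ht. unfold slice, content_sum.
  rewrite (sumC_swap (fun jj a => if list_eq_dec Nat.eq_dec (content n a) kap
                                  then gen0_term k a jj else C0)).
  rewrite (sumC_swap (fun jj a => if list_eq_dec Nat.eq_dec (content n a) kap
                                  then gen1_term k a jj else C0)).
  rewrite <- sumC_add. apply sumC_ext. intros a Ha. rewrite <- sumC_add.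
  apply In_words in Ha. destruct Ha as [Hva Hla]. rewrite sumC_if_dec, Hla.
  apply sumC_ext. intros jj Hjj. apply in_seq in Hjj. destruct list_eq_dec; [| Cring].
  rewrite (IsProd_gen_r u i j t ltac:(lia) Ht), length_firstn, firstn_firstn.
  replace (Nat.min jj (length a)) with jj by lia.
  replace (Nat.min (jj - 2) jj) with (jj - 2)%nat by lia.
  unfold gen0_term, gen1_term. destruct (Nat.leb 2 jj); Cring.
Qed.

Lemma content_sum_gen1 k : content_sum (gen1_term k) = Copp (content_sum (gen0_term (k - 1))).
Proof.
  unfold content_sum. rewrite <- sumC_opp. apply sumC_ext. intros jj Hjj. apply in_seq in Hjj.
  destruct (Nat.leb_spec 2 jj).
  - rewrite (sumC_involution (fun a => if list_eq_dec Nat.eq_dec (content n a) kap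
                                       then gen0_term (k - 1) a jj else C0) (swap_at (jj - 2)));
      [| apply NoDup_words | intros; apply swap_at_words; auto | intros; apply swap_at_involutive].
    rewrite <- sumC_opp. apply sumC_ext. intros a Ha.
    apply In_words in Ha. destruct Ha as [Hva Hla].
    assert (Hsp : (jj - 2 + 2 <= length a)%nat) by lia.
    destruct (split_at (jj - 2) a Hsp) as [Ea La].
    set (X := firstn (jj - 2) a) in *. set (c1 := nth (jj - 2) a 0%nat) in *.
    set (c2 := nth (S (jj - 2)) a 0%nat) in *. set (Y := skipn (S (S (jj - 2))) a) in *.
    assert (Ejj : jj = (length X + 2)%nat) by lia.
    assert (Esw : swap_at (jj - 2) a = X ++ c2 :: c1 :: Y).
    { rewrite Ea at 1. rewrite <- La. apply swap_at_eq. }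
    assert (Hk : content n (X ++ c2 :: c1 :: Y) = content n a).
    { rewrite <- Esw. apply occ_content. apply swap_at_occ. }
    rewrite Esw, Hk. destruct list_eq_dec; [| Cring].
    rewrite Ea at 1. rewrite Ejj, gen1_term_swap. auto.
  - rewrite !sumC_zero; [Cring | |]; intros a _; unfold gen0_term, gen1_term;
      destruct (Nat.leb_spec 2 jj); try lia; destruct list_eq_dec; auto.
Qed.

Lemma slice_telescopes t k : IsProd u (gen i j) t ->
  slice t k = Csub (content_sum (gen0_term k)) (content_sum (gen0_term (k - 1))).
Proof. intros Ht. rewrite slice_split, content_sum_gen1 by auto. Cring. Qed.

Section Bounds.
Variables (sg Bu Bv : R).
Hypothesis Hsg : 0 < sg.
Hypothesis Hu : forall k a, Cnorm (u k a) * (2 ^ Z.abs_nat k * sg ^ length a) <= Bu.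
Hypothesis Hv : forall k a, Cnorm (v k a) * (2 ^ Z.abs_nat k * sg ^ length a) <= Bv.

Definition gen0_bound (jj : nat) (a : word) : R :=
  (Bu / sg ^ length (firstn (jj - 2) a)) * (Bv / sg ^ length (skipn jj a)).

Lemma gen0_bound_nonneg jj a : 0 <= gen0_bound jj a.
Proof.
  assert (Hpow : forall m, 0 < / sg ^ m) by (intros; apply Rinv_0_lt_compat, pow_lt; auto).
  assert (HBu : 0 <= Bu) by (eapply Rle_trans; [| apply (Hu 0%Z nil)];
                             apply Rmult_le_pos; [apply Cnorm_nonneg | simpl; lra]).
  assert (HBv : 0 <= Bv) by (eapply Rle_trans; [| apply (Hv 0%Z nil)];
                             apply Rmult_le_pos; [apply Cnorm_nonneg | simpl; lra]).
  unfold gen0_bound, Rdiv. apply Rmult_le_pos; apply Rmult_le_pos; auto using Rlt_le.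
Qed.

Lemma gen0_term_bound k a jj : Cnorm (gen0_term k a jj) * 2 ^ Z.abs_nat k <= gen0_bound jj a.
Proof.
  assert (Hpow : forall m, 0 < sg ^ m) by (intros; apply pow_lt; auto).
  unfold gen0_term. destruct (Nat.leb 2 jj);
    [| rewrite Cnorm_C0, Rmult_0_l; apply gen0_bound_nonneg].
  rewrite !Cnorm_mul. set (x := firstn (jj - 2) a). set (y := skipn jj a).
  set (l := (M - Z.of_nat (asc a) - k)%Z). set (s := skipn (jj - 2) (firstn jj a)).
  pose proof (Cnorm_gen i j 0%Z s ltac:(lia)). pose proof (Cnorm_nonneg (gen i j 0%Z s)).
  assert (Bx : Cnorm (u k x) * 2 ^ Z.abs_nat k <= Bu / sg ^ length x).
  { apply Rmult_le_reg_r with (sg ^ length x); auto.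
    replace (Bu / sg ^ length x * sg ^ length x) with Bu by (specialize (Hpow (length x)); field; lra).
    rewrite Rmult_assoc. apply Hu. }
  assert (By : Cnorm (v l y) <= Bv / sg ^ length y).
  { apply Rmult_le_reg_r with (sg ^ length y); auto.
    replace (Bv / sg ^ length y * sg ^ length y) with Bv by (specialize (Hpow (length y)); field; lra).
    eapply Rle_trans; [| apply (Hv l y)]. pose proof (Cnorm_nonneg (v l y)).
    assert (1 <= 2 ^ Z.abs_nat l) by (apply pow_R1_Rle; lra).
    specialize (Hpow (length y)).
    assert (0 <= Cnorm (v l y) * sg ^ length y) by (apply Rmult_le_pos; lra). nra. }
  unfold gen0_bound. fold x y. pose proof (Cnorm_nonneg (u k x)). pose proof (Cnorm_nonneg (v l y)).
  assert (0 < 2 ^ Z.abs_nat k) by (apply pow_lt; lra).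
  replace (Cnorm (u k x) * Cnorm (gen i j 0%Z s) * Cnorm (v l y) * 2 ^ Z.abs_nat k)
    with ((Cnorm (u k x) * 2 ^ Z.abs_nat k) * (Cnorm (gen i j 0%Z s) * Cnorm (v l y))) by ring.
  apply Rmult_le_compat; try nra.
Qed.

Lemma gen0_content_sum_bound k :
  Cnorm (content_sum (gen0_term k)) * 2 ^ Z.abs_nat k
  <= sumR (fun jj => sumR (gen0_bound jj) (words n L)) (seq 0 (S L)).
Proof.
  assert (P4 : 0 < 2 ^ Z.abs_nat k) by (apply pow_lt; lra).
  unfold content_sum. eapply Rle_trans.
  { apply Rmult_le_compat_r; [lra |].
    eapply Rle_trans; [apply Cnorm_sumC | apply sumR_le; intros jj _; apply Cnorm_sumC]. }
  rewrite Rmult_comm, <- sumR_scal. apply sumR_le. intros jj _.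
  rewrite <- sumR_scal. apply sumR_le. intros a _. rewrite Rmult_comm.
  destruct list_eq_dec; [apply gen0_term_bound |].
  rewrite Cnorm_C0, Rmult_0_l. apply gen0_bound_nonneg.
Qed.

End Bounds.

End ProductWithGen.

Lemma ncoef_prod_gen n r W u v t w i j : geometric_minorant r W ->
  InSp n r W u -> InSp n r W v -> (i < j)%nat ->
  IsProd u (gen i j) t -> IsProd t v w -> forall M kap L, ncoef n w M kap L = C0.
Proof.
  intros [p [sg [Hp [Hsg HWd]]]] Hu Hv Hij Ht Hw M kap L.
  destruct (InSp_coef_bound n r W p sg u Hp Hsg HWd Hu) as [Bu [_ Bu']].
  destruct (InSp_coef_bound n r W p sg v Hp Hsg HWd Hv) as [Bv [_ Bv']].
  set (B := sumR (fun jj => sumR (gen0_bound sg Bu Bv jj) (words n L)) (seq 0 (S L))).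
  assert (HB : 0 <= B) by (apply sumR_nonneg; intros; apply sumR_nonneg; intros;
                           apply (gen0_bound_nonneg u v sg); auto).
  pose proof (gen0_content_sum_bound n u v i j M kap L Hij sg Bu Bv Hsg Bu' Bv') as HBk.
  apply (ZHasSum_telescope (slice n v M kap L t)
                           (fun k => content_sum n kap L (gen0_term u v i j M k)));
    [intros; apply slice_telescopes; auto | | apply slices_sum; auto].
  intros eps He. destruct (geometric_small B eps HB He) as [K HK]. exists K. intros k Hk.
  assert (P4 : 0 < 2 ^ Z.abs_nat k) by (apply pow_lt; lra).
  eapply Rle_trans; [| apply (HK (Z.abs_nat k)); lia].
  apply Rmult_le_reg_r with (2 ^ Z.abs_nat k); auto.
  unfold Rdiv. rewrite Rmult_assoc, Rinv_l, Rmult_1_r by lra. auto.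
Qed.

Lemma ncoef_add n c d M kap L :
  ncoef n (cadd c d) M kap L = Cadd (ncoef n c M kap L) (ncoef n d M kap L).
Proof.
  unfold ncoef, cadd. rewrite <- sumC_add. apply sumC_ext. intros. destruct list_eq_dec; auto.
  Cring.
Qed.

Lemma ncoef_sub n c d M kap L :
  ncoef n (csub c d) M kap L = Csub (ncoef n c M kap L) (ncoef n d M kap L).
Proof.
  unfold ncoef, csub. rewrite <- sumC_sub. apply sumC_ext. intros. destruct list_eq_dec; auto.
  Cring.
Qed.

Lemma ncoef_InJ n r W y : geometric_minorant r W -> InJ n r W y ->
  forall M kap L, ncoef n y M kap L = C0.
Proof.
  intros HD H. induction H as [| x u v t w i j y Hx IH Hu Hv Hij Hjn Ht Hw Hy]; intros M kap L.
  - unfold ncoef, czero. apply sumC_zero. intros. destruct list_eq_dec; auto.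
  - replace y with (cadd x w) by (apply Coef_ext; intros; unfold cadd; auto).
    rewrite ncoef_add, IH, (ncoef_prod_gen n r W u v t w i j HD Hu Hv Hij Ht Hw). Cring.
Qed.

Lemma Cnorm_ncoef_le n w sg c eps M kap L : 0 < sg ->
  (forall k a, 2 ^ Z.abs_nat k * sg ^ length a <= w k a) -> (forall N, PS n w c N <= eps) ->
  Cnorm (ncoef n c M kap L)
  <= eps * sumR (fun a => / (2 ^ Z.abs_nat (M - Z.of_nat (asc a)) * sg ^ length a)) (words n L).
Proof.
  intros Hsg Hw Hc. set (wk := fun a => 2 ^ Z.abs_nat (M - Z.of_nat (asc a)) * sg ^ length a).
  assert (Hwk : forall a, 0 < wk a) by (intros; unfold wk; apply Rmult_lt_0_compat; apply pow_lt; lra).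
  assert (Hpos : nonneg_weight w) by (intros k a; eapply Rle_trans; [| apply Hw];
                                      apply Rmult_le_pos; apply pow_le; lra).
  assert (He : 0 <= eps) by (eapply Rle_trans; [apply (PS_nonneg n w c 0 Hpos) | apply Hc]).
  unfold ncoef. eapply Rle_trans; [apply Cnorm_sumC |]. rewrite <- sumR_scal.
  apply sumR_le. intros a Ha. pose proof (Rinv_0_lt_compat _ (Hwk a)).
  destruct list_eq_dec;
    [| rewrite Cnorm_C0; apply Rmult_le_pos; [lra | apply Rlt_le, Rinv_0_lt_compat, Hwk]].
  destruct (box_exists n (M - Z.of_nat (asc a))%Z a (words_valid _ _ _ Ha)) as [N HN].
  pose proof (PS_term n w c N _ _ Hpos HN). pose proof (Hc N).
  apply Rmult_le_reg_r with (wk a); auto.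
  rewrite Rmult_assoc, Rinv_l, Rmult_1_r by (specialize (Hwk a); lra).
  eapply Rle_trans; [apply Rmult_le_compat_l; [apply Cnorm_nonneg | apply Hw] | lra].
Qed.

Lemma Cnorm_arbitrarily_small x K : 0 <= K -> (forall eps, 0 < eps -> Cnorm x <= eps * K) -> x = C0.
Proof.
  intros HK Hx. apply Cnorm_le0. apply Rnot_lt_le. intros Hpos.
  assert (He : 0 < Cnorm x / (K + 1)) by (apply Rdiv_lt_0_compat; lra).
  specialize (Hx _ He). unfold Rdiv in Hx.
  assert (Cnorm x * / (K + 1) * K < Cnorm x).
  { apply Rmult_lt_reg_r with (K + 1); [lra |]. field_simplify; lra. }
  lra.
Qed.

Lemma ncoef_InI n r W c : geometric_minorant r W -> InI n r W c ->
  forall M kap L, ncoef n c M kap L = C0.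
Proof.
  intros HD [Hc HI] M kap L. pose proof HD as [p [sg [Hp [Hsg HWd]]]].
  apply (Cnorm_arbitrarily_small _
           (sumR (fun a => / (2 ^ Z.abs_nat (M - Z.of_nat (asc a)) * sg ^ length a)) (words n L))).
  - apply sumR_nonneg. intros a _.
    apply Rlt_le, Rinv_0_lt_compat, Rmult_lt_0_compat; apply pow_lt; lra.
  - intros eps He. destruct (HI p Hp eps He) as [y [Hy HPS]].
    replace (ncoef n c M kap L) with (ncoef n (csub c y) M kap L)
      by (rewrite ncoef_sub, (ncoef_InJ n r W y); auto; Cring).
    apply (Cnorm_ncoef_le n (W p)); auto.
Qed.

(** * Comparison of the two quotients *)

Definition sigma0 (r : option R) : R := match r with Some x => x / 2 | None => 1 end.

Lemma adm_base r : (forall x, r = Some x -> 0 < x) -> adm r (2, sigma0 r, 1) /\ 0 < sigma0 r.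
Proof.
  intros hr. destruct r as [x |]; simpl.
  - specialize (hr x eq_refl). repeat split; lra.
  - repeat split; lra.
Qed.

Lemma geometric_minorant_wFT r : (forall x, r = Some x -> 0 < x) -> geometric_minorant r wFT.
Proof.
  intros hr. destruct (adm_base r hr) as [Ha Hs]. exists (2, sigma0 r, 1), (sigma0 r).
  do 2 (split; auto). intros k a. simpl. lra.
Qed.

Lemma PS_wFT_le_wF n r p c N : adm r p -> PS n (wFT p) c N <= PS n (wF p) c N.
Proof.
  intros Hp. apply PS_le. intros k a _. apply Rmult_le_compat_l; [apply Cnorm_nonneg |].
  apply (wFT_le_wF r); auto.
Qed.

Lemma InSp_wF_wFT n r c : InSp n r wF c -> InSp n r wFT c.
Proof.
  intros [H1 H2]. split; auto. intros p Hp. destruct (H2 p Hp) as [M HM]. exists M. intros N.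
  eapply Rle_trans; [apply (PS_wFT_le_wF n r) | apply HM]; auto.
Qed.

Lemma InJ_wF_wFT n r y : InJ n r wF y -> InJ n r wFT y.
Proof.
  induction 1 as [| x u v t w i j y Hx IH Hu Hv Hij Hjn Ht Hw Hy]; [constructor |].
  apply (JS n r wFT x u v t w i j); auto; apply InSp_wF_wFT; auto.
Qed.

Lemma InI_wF_wFT n r c : InI n r wF c -> InI n r wFT c.
Proof.
  intros [Hc HI]. split; [apply InSp_wF_wFT; auto |]. intros p Hp eps He.
  destruct (HI p Hp eps He) as [y [Hy HP]]. exists y. split; [apply InJ_wF_wFT; auto |].
  intros N. eapply Rle_trans; [apply (PS_wFT_le_wF n r) | apply HP]; auto.
Qed.

Lemma InSp_add n r W c d : (forall p, adm r p -> nonneg_weight (W p)) ->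
  InSp n r W c -> InSp n r W d -> InSp n r W (cadd c d).
Proof.
  intros HW [H1 H2] [G1 G2]. split.
  - intros k a Ha. unfold cadd. rewrite H1, G1 by auto. Cring.
  - intros p Hp. destruct (H2 p Hp) as [M HM]. destruct (G2 p Hp) as [M' HM'].
    exists (M + M'). intros N. eapply Rle_trans; [apply PS_add, HW; auto |].
    pose proof (HM N). pose proof (HM' N). lra.
Qed.

Lemma InSp_sub n r W c d : (forall p, adm r p -> nonneg_weight (W p)) ->
  InSp n r W c -> InSp n r W d -> InSp n r W (csub c d).
Proof.
  intros HW [H1 H2] [G1 G2]. split.
  - intros k a Ha. unfold csub. rewrite H1, G1 by auto. Cring.
  - intros p Hp. destruct (H2 p Hp) as [M HM]. destruct (G2 p Hp) as [M' HM'].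
    exists (M + M'). intros N. eapply Rle_trans; [apply PS_sub, HW; auto |].
    pose proof (HM N). pose proof (HM' N). lra.
Qed.

Lemma rearr_coef_InSp n r d : InSp n r wFT d -> InSp n r wF (rearr_coef n d).
Proof.
  intros [H1 H2]. split.
  - intros k w' Hw'. unfold rearr_coef. apply sumC_zero. intros w Hw. destruct list_eq_dec; auto.
    exfalso. apply Hw'. rewrite <- e. apply rearr_valid. eapply words_valid; eauto.
  - intros p Hp. destruct (H2 p Hp) as [M HM]. destruct p as [[rho sg] tau].
    destruct Hp as [A1 [A2 [A3 A4]]].
    exists (tau ^ (switch_bound n + 1) * M). intros N.
    eapply Rle_trans; [apply PS_rearr_coef; auto |].
    apply Rmult_le_compat_l; [apply pow_le; lra | auto].
Qed.

Lemma InI_wF_of_wFT n r c : (forall x, r = Some x -> 0 < x) ->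
  InSp n r wF c -> InI n r wFT c -> InI n r wF c.
Proof.
  intros hr Hc HI. apply InI_of_ncoef_zero; auto.
  - intros p; apply wF_nonneg.
  - apply (ncoef_InI n r wFT); auto using geometric_minorant_wFT.
Qed.

Lemma rearr_coef_same_class n r b : (forall x, r = Some x -> 0 < x) ->
  InSp n r wFT b -> InI n r wFT (csub b (rearr_coef n b)).
Proof.
  intros hr Hb. assert (HW : forall p, adm r p -> nonneg_weight (wFT p)) by apply wFT_nonneg.
  apply InI_of_ncoef_zero; auto.
  - apply InSp_sub; auto. apply InSp_wF_wFT, rearr_coef_InSp; auto.
  - intros M kap L. rewrite ncoef_sub, ncoef_rearr_coef. Cring.
Qed.

Lemma QB_wF_wFT n r q c M : adm r q -> QB n r wF q c M -> QB n r wFT q c M.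
Proof.
  intros Hq HQ eps He. destruct (HQ eps He) as [x [Hx HP]].
  exists x. split; [apply InI_wF_wFT; auto |].
  intros N. eapply Rle_trans; [apply (PS_wFT_le_wF n r) | apply HP]; auto.
Qed.

(** A representative [c + x] of the class that is small for the
    [F^T]-seminorm is replaced by [rearr_coef n (c + x)], which lies in the
    same class and is small for the [F]-seminorm. *)
Lemma QB_wFT_wF n r rho sg tau c M : (forall x, r = Some x -> 0 < x) ->
  adm r (rho, sg, tau) -> InSp n r wF c -> QB n r wFT (rho, sg, tau) c M ->
  QB n r wF (rho, sg, tau) c (tau ^ (switch_bound n + 1) * M).
Proof.
  intros hr Hp Hc HQ eps He. pose proof Hp as [A1 [A2 [A3 A4]]].
  assert (HWF : forall p, adm r p -> nonneg_weight (wF p)) by apply wF_nonneg.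
  assert (HWT : forall p, adm r p -> nonneg_weight (wFT p)) by apply wFT_nonneg.
  set (K := tau ^ (switch_bound n + 1)).
  assert (HK : 0 < K) by (apply pow_lt; lra).
  destruct (HQ (eps / K)) as [x [Hx HP]]; [apply Rdiv_lt_0_compat; auto |].
  set (a := rearr_coef n (cadd c x)).
  assert (Ha : InSp n r wF a).
  { apply rearr_coef_InSp, InSp_add; auto using InSp_wF_wFT. apply Hx. }
  exists (csub a c). split.
  - apply InI_of_ncoef_zero; auto.
    + apply InSp_sub; auto.
    + intros M' kap L. unfold a.
      rewrite ncoef_sub, ncoef_rearr_coef, ncoef_add, (ncoef_InI n r wFT x);
        auto using geometric_minorant_wFT.
      Cring.
  - intros N. rewrite (PS_ext n _ (cadd c (csub a c)) a) by (intros; unfold cadd, csub; Cring).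
    eapply Rle_trans; [apply PS_rearr_coef; auto |]. fold K.
    replace (K * M + eps) with (K * (M + eps / K)) by (field; lra).
    apply Rmult_le_compat_l; [lra | apply HP].
Qed.

Theorem theorem8p8 (n : nat) (r : option R) (hr : forall x, r = Some x -> 0 < x) :
  (* the inclusion maps the space and the ideal into the target, so the map is induced *)
  (forall c, InSp n r wF c -> InSp n r wFT c) /\
  (forall c, InI n r wF c -> InI n r wFT c) /\
  (* injective *)
  (forall c, InSp n r wF c -> InI n r wFT c -> InI n r wF c) /\
  (* surjective *)
  (forall b, InSp n r wFT b -> exists a, InSp n r wF a /\ InI n r wFT (csub b a)) /\
  (* continuous *)
  (forall q, adm r q -> exists p C, adm r p /\ 0 < C /\
     forall c M, InSp n r wF c -> QB n r wF p c M -> QB n r wFT q c (C * M)) /\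
  (* inverse continuous *)
  (forall p, adm r p -> exists q C, adm r q /\ 0 < C /\
     forall c M, InSp n r wF c -> QB n r wFT q c M -> QB n r wF p c (C * M)).
Proof.
  split; [apply InSp_wF_wFT |]. split; [apply InI_wF_wFT |].
  split; [intros c; apply InI_wF_of_wFT; auto |].
  split.
  { intros b Hb. exists (rearr_coef n b).
    split; [apply rearr_coef_InSp | apply rearr_coef_same_class]; auto. }
  split.
  { intros q Hq. exists q, 1. split; [auto | split; [lra |]].
    intros c M _. rewrite Rmult_1_l. apply QB_wF_wFT; auto. }
  intros [[rho sg] tau] Hp. exists (rho, sg, tau), (tau ^ (switch_bound n + 1)).
  pose proof Hp as [_ [_ [_ Htau]]].
  split; [auto | split; [apply pow_lt; lra |]].
  intros c M Hc. apply QB_wFT_wF; auto.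
Qed.
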